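(* Let $0<\gamma<1$, $\Omega=(a,b)\times(c,d)$, and $u\in C^6([a,b]\times[c,d])$, and let $u_Q$ be its tensor-product piecewise quadratic interpolant (see context). Then there is a constant $C$, depending on $u,\gamma,a,b,c,d$ but not on $M_x,M_y,i,j$, such that for all $M_x,M_y\ge2$ and all $i\in\{1,\dots,2M_x-1\}$, $j\in\{1,\dots,2M_y-1\}$, $$\left|\int_c^d\!\!\int_a^b\frac{u(x,y)-u_Q(x,y)}{|x_{i/2}-x|^{\gamma}\,|y_{j/2}-y|^{\gamma}}\,dx\,dy\right|\le C\Big(h_x^4\eta_{i/2}^{-\gamma}+h_y^4\tilde\eta_{j/2}^{-\gamma}+h_x^{5-\gamma}+h_y^{5-\gamma}\Big),$$ where $\eta_{i/2}=\min\{x_{i/2}-a,\,b-x_{i/2}\}$ and $\tilde\eta_{j/2}=\min\{y_{j/2}-c,\,d-y_{j/2}\}$.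
   Context: Let $a<b$, $c<d$, $M_x,M_y\ge2$ integers, $h_x=(b-a)/M_x$, $h_y=(d-c)/M_y$, $x_s=a+sh_x$ ($s\in\{0,\tfrac12,\dots,M_x\}$), $y_s=c+sh_y$ ($s\in\{0,\tfrac12,\dots,M_y\}$). On $[a,b]$ the piecewise quadratic Lagrange basis $\phi_s(x)$ is: for integers $0\le l\le M_x$, $\phi_l(x)=\frac{x-x_{l-1}}{h_x}\cdot\frac{2x-(x_l+x_{l-1})}{h_x}$ on $[x_{l-1},x_l]\cap[a,b]$, $\phi_l(x)=\frac{x_{l+1}-x}{h_x}\cdot\frac{(x_{l+1}+x_l)-2x}{h_x}$ on $[x_l,x_{l+1}]\cap[a,b]$, $0$ otherwise; for $l=1,\dots,M_x$, $\phi_{l-\frac12}(x)=\frac{4(x-x_{l-1})(x_l-x)}{h_x^2}$ on $[x_{l-1},x_l]$, $0$ otherwise. The basis $\phi_s(y)$ on $[c,d]$ is defined analogously with $y_s,h_y,M_y$. The interpolant is $$u_Q(x,y)=\sum_{l=0}^{2M_x}\sum_{r=0}^{2M_y}\phi_{l/2}(x)\phi_{r/2}(y)\,u(x_{l/2},y_{r/2}).$$ *)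

From Stdlib Require Import Reals Lra.
Open Scope R_scope.

Definition is_RInt (f : R -> R) (lo hi v : R) : Prop :=
  exists pr : Riemann_integrable f lo hi, RiemannInt pr = v.

Definition sing_int (f : R -> R) (lo hi p v : R) : Prop :=
  forall eps, 0 < eps -> exists delta, 0 < delta /\
    forall e, 0 < e < delta -> exists v1 v2,
      is_RInt f lo (p - e) v1 /\ is_RInt f (p + e) hi v2 /\
      Rabs (v1 + v2 - v) < eps.

Definition weak_sing_double_int (F : R -> R -> R) (a b c d p q g I : R) : Prop :=
  exists G : R -> R,
    (forall y, c <= y <= d ->
       sing_int (fun x => F x y / Rpower (Rabs (p - x)) g) a b p (G y)) /\
    sing_int (fun y => G y / Rpower (Rabs (q - y)) g) c d q I.

Definition has_deriv_in (f : R -> R) (lo hi x l : R) : Prop :=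
  forall eps, 0 < eps -> exists delta, 0 < delta /\
    forall h, h <> 0 -> Rabs h < delta -> lo <= x + h <= hi ->
      Rabs ((f (x + h) - f x) / h - l) < eps.

Definition in_rect (a b c d x y : R) : Prop := a <= x <= b /\ c <= y <= d.

Definition cont_on_rect (F : R -> R -> R) (a b c d : R) : Prop :=
  forall x y, in_rect a b c d x y ->
    forall eps, 0 < eps -> exists delta, 0 < delta /\
      forall x' y', in_rect a b c d x' y' ->
        Rabs (x' - x) < delta -> Rabs (y' - y) < delta ->
        Rabs (F x' y' - F x y) < eps.

(* u in C^k([a,b] x [c,d]): all partial derivatives D k l = d^{k+l}u/dx^k dy^l
   of order k+l <= n exist on the closed rectangle (one-sided on the boundary)
   and are continuous up to the boundary. *)
Definition Ck_rect (n : nat) (u : R -> R -> R) (a b c d : R) : Prop :=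
  exists D : nat -> nat -> R -> R -> R,
    (forall x y, in_rect a b c d x y -> D 0%nat 0%nat x y = u x y) /\
    (forall k l, (k + l <= n)%nat -> cont_on_rect (D k l) a b c d) /\
    (forall k l, (k + l < n)%nat -> forall x y, in_rect a b c d x y ->
        has_deriv_in (fun t => D k l t y) a b x (D (S k) l x y) /\
        has_deriv_in (fun t => D k l x t) c d y (D k (S l) x y)).

Definition node (a h s : R) : R := a + s * h.

Definition inI (lo hi x : R) : bool :=
  if Rle_dec lo x then if Rle_dec x hi then true else false else false.

Definition phi_int (a h : R) (M m : nat) (x : R) : R :=
  let b := a + INR M * h in
  let xm1 := node a h (INR m - 1) in
  let xm := node a h (INR m) in
  let xp1 := node a h (INR m + 1) in
  if andb (inI xm1 xm x) (inI a b x) then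
    ((x - xm1) / h) * ((2 * x - (xm + xm1)) / h)
  else if andb (inI xm xp1 x) (inI a b x) then
    ((xp1 - x) / h) * (((xp1 + xm) - 2 * x) / h)
  else 0.

Definition phi_bub (a h : R) (m : nat) (x : R) : R :=
  let xm1 := node a h (INR m - 1) in
  let xm := node a h (INR m) in
  if inI xm1 xm x then 4 * (x - xm1) * (xm - x) / (h ^ 2) else 0.

Definition phi_half (a h : R) (M l : nat) (x : R) : R :=
  if Nat.even l then phi_int a h M (Nat.div2 l) x
  else phi_bub a h (Nat.div2 (S l)) x.

Definition hnode (a h : R) (l : nat) : R := node a h (INR l / 2).

Definition uQ (u : R -> R -> R) (a b c d : R) (Mx My : nat) (x y : R) : R :=
  let hx := (b - a) / INR Mx in
  let hy := (d - c) / INR My in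
  sum_f_R0 (fun l =>
    sum_f_R0 (fun r =>
      phi_half a hx Mx l x * phi_half c hy My r y
        * u (hnode a hx l) (hnode c hy r)) (2 * My)) (2 * Mx).

(* The truncated weight [max(e, |p - x|)^(-g)] turns a weakly singular integral into an
   ordinary one; for a continuous integrand the truncated integrals converge as [e -> 0] to
   the improper integral, and the limit [pv] is a bounded linear functional.

   In one dimension, on an element [[al, al + h]] with midpoint [c] the interpolation error
   is [f'''(c)/6 (x - al)(x - al - h/2)(x - al - h)] up to [O(h^4)], and [f'''(c)] may be
   replaced by [f'''(p)] at the cost of [|c - p|] times the moment of this nodal polynomial.
   The nodal polynomial has mean zero, so its moment against the weight is small on elements
   far from [p], while the moments of elements placed symmetrically about the node [p]
   cancel; what remains is [O(h^4 eta^(-g))].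

   In two dimensions, [u - u_Q] is the [x]-interpolation error of [u] plus the
   [x]-interpolant of the [y]-interpolation errors at the [x]-nodes; the one-dimensional
   estimate along slices bounds both parts. *)

From Stdlib Require Import Reals Lra Lia Classical ClassicalEpsilon.
From Coquelicot Require Import Coquelicot.
Open Scope R_scope.

Definition clamp (lo hi x : R) : R := Rmax lo (Rmin hi x).

Lemma clamp_in lo hi x : lo <= hi -> lo <= clamp lo hi x <= hi.
Proof. intros H; unfold clamp, Rmax, Rmin; repeat destruct Rle_dec; lra. Qed.

Lemma clamp_id lo hi x : lo <= x <= hi -> clamp lo hi x = x.
Proof. intros H; unfold clamp, Rmax, Rmin; repeat destruct Rle_dec; lra. Qed.

Lemma clamp_lipschitz lo hi x y : lo <= hi ->
  Rabs (clamp lo hi x - clamp lo hi y) <= Rabs (x - y).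
Proof.
  intros H; unfold clamp, Rmax, Rmin; repeat destruct Rle_dec;
  unfold Rabs; repeat destruct Rcase_abs; lra.
Qed.

Definition cont_within (lo hi : R) (f : R -> R) : Prop :=
  forall x, lo <= x <= hi -> forall eps, 0 < eps -> exists delta, 0 < delta /\
    forall x', lo <= x' <= hi -> Rabs (x' - x) < delta -> Rabs (f x' - f x) < eps.

Lemma continuous_clamp_comp lo hi f : lo <= hi -> cont_within lo hi f ->
  forall z, continuous (fun x => f (clamp lo hi x)) z.
Proof.
  intros Hlh Hf z. apply continuity_pt_filterlim. intros eps Heps.
  destruct (Hf (clamp lo hi z) (clamp_in lo hi z Hlh) eps Heps) as [d [Hd H]].
  exists d; split; [exact Hd|]. intros x [_ Hx]. simpl in *. unfold R_dist in *.
  apply H. apply clamp_in; auto.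
  eapply Rle_lt_trans. apply clamp_lipschitz; auto. exact Hx.
Qed.

Lemma cont_within_ext lo hi f g : (forall x, lo <= x <= hi -> f x = g x) ->
  cont_within lo hi f -> cont_within lo hi g.
Proof.
  intros E Hf x Hx eps He. destruct (Hf x Hx eps He) as [d [Hd H]].
  exists d; split; auto. intros x' Hx' Hxx. rewrite <- !E; auto.
Qed.

Lemma cont_within_of_continuous lo hi f : (forall x, continuous f x) -> cont_within lo hi f.
Proof.
  intros Hf x Hx eps He.
  destruct (proj2 (continuity_pt_filterlim f x) (Hf x) eps He) as [d [Hd H]].
  exists d; split; auto. intros x' _ Hxx.
  destruct (Req_dec x' x) as [->|Hne]. rewrite Rminus_eq_0, Rabs_R0; lra.
  apply (H x'). split. split. exact I. auto. exact Hxx.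
Qed.

Lemma cont_within_plus lo hi f g : cont_within lo hi f -> cont_within lo hi g ->
  cont_within lo hi (fun x => f x + g x).
Proof.
  intros Hf Hg x Hx eps He.
  destruct (Hf x Hx (eps/2)) as [d1 [Hd1 H1]]; [lra|].
  destruct (Hg x Hx (eps/2)) as [d2 [Hd2 H2]]; [lra|].
  exists (Rmin d1 d2); split. apply Rmin_pos; auto.
  intros x' Hx' Hxx.
  assert (A1 : Rabs (x' - x) < d1) by (eapply Rlt_le_trans; [exact Hxx| apply Rmin_l]).
  assert (A2 : Rabs (x' - x) < d2) by (eapply Rlt_le_trans; [exact Hxx| apply Rmin_r]).
  specialize (H1 x' Hx' A1); specialize (H2 x' Hx' A2).
  replace (f x' + g x' - (f x + g x)) with ((f x' - f x) + (g x' - g x)) by ring.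
  eapply Rle_lt_trans. apply Rabs_triang. lra.
Qed.

Lemma cont_within_scal lo hi f k : cont_within lo hi f -> cont_within lo hi (fun x => k * f x).
Proof.
  intros Hf x Hx eps He.
  assert (Hk : 0 < Rabs k + 1) by (pose proof (Rabs_pos k); lra).
  destruct (Hf x Hx (eps / (Rabs k + 1))) as [d [Hd H]].
  { apply Rdiv_lt_0_compat; auto. }
  exists d; split; auto. intros x' Hx' Hxx. specialize (H x' Hx' Hxx).
  rewrite <- Rmult_minus_distr_l, Rabs_mult.
  apply Rle_lt_trans with (Rabs k * (eps / (Rabs k + 1))).
  { apply Rmult_le_compat_l; [apply Rabs_pos| lra]. }
  apply (Rmult_lt_reg_r (Rabs k + 1)); auto. unfold Rdiv.
  rewrite Rmult_assoc, (Rmult_assoc eps), Rinv_l by lra. nra.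
Qed.

Lemma cont_within_minus lo hi f g : cont_within lo hi f -> cont_within lo hi g ->
  cont_within lo hi (fun x => f x - g x).
Proof.
  intros Hf Hg. apply (cont_within_ext _ _ (fun x => f x + -1 * g x)). intros; ring.
  apply cont_within_plus; auto. apply cont_within_scal; auto.
Qed.

Lemma cont_within_sum lo hi (F : nat -> R -> R) n :
  (forall l, (l <= n)%nat -> cont_within lo hi (F l)) ->
  cont_within lo hi (fun x => sum_f_R0 (fun l => F l x) n).
Proof.
  induction n; intros H; simpl.
  - apply H; lia.
  - apply cont_within_plus. apply IHn. intros; apply H; lia. apply H; lia.
Qed.

Lemma cont_within_bounded lo hi f : lo <= hi -> cont_within lo hi f ->
  exists B, 0 <= B /\ forall x, lo <= x <= hi -> Rabs (f x) <= B.
Proof.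
  intros Hlh Hf.
  destruct (continuity_ab_maj (fun x => Rabs (f (clamp lo hi x))) lo hi Hlh) as [m [Hm _]].
  { intros c0 _. apply continuity_pt_filterlim.
    apply (continuous_comp (fun x => f (clamp lo hi x)) Rabs).
    apply continuous_clamp_comp; auto. apply continuous_Rabs. }
  exists (Rabs (f (clamp lo hi m))). split. apply Rabs_pos.
  intros x Hx. specialize (Hm x Hx). simpl in Hm. rewrite clamp_id in Hm; auto.
Qed.

Definition Rcont (f : R -> R) := forall x, continuous f x.

Lemma ex_RInt_Rcont f a b : Rcont f -> ex_RInt f a b.
Proof. intros H; apply (ex_RInt_continuous (V:=R_CompleteNormedModule)); intros; apply H. Qed.

Lemma Rcont_ext f g : (forall x, f x = g x) -> Rcont f -> Rcont g.
Proof. intros E H x. apply (continuous_ext f); auto. Qed.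
Lemma Rcont_const k : Rcont (fun _ => k).
Proof. intros x; apply continuous_const. Qed.
Lemma Rcont_id : Rcont (fun x => x).
Proof. intros x; apply continuous_id. Qed.
Lemma Rcont_plus f g : Rcont f -> Rcont g -> Rcont (fun x => f x + g x).
Proof. intros Hf Hg x. apply (continuous_plus f g); auto. Qed.
Lemma Rcont_mult f g : Rcont f -> Rcont g -> Rcont (fun x => f x * g x).
Proof. intros Hf Hg x. apply (continuous_mult f g); auto. Qed.
Lemma Rcont_scal k f : Rcont f -> Rcont (fun x => k * f x).
Proof. intros; apply Rcont_mult; auto. apply Rcont_const. Qed.
Lemma Rcont_minus f g : Rcont f -> Rcont g -> Rcont (fun x => f x - g x).
Proof.
  intros Hf Hg. apply (Rcont_ext (fun x => f x + -1 * g x)). intros; ring.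
  apply Rcont_plus; auto. apply Rcont_scal; auto.
Qed.
Lemma Rcont_abs f : Rcont f -> Rcont (fun x => Rabs (f x)).
Proof. intros H x. apply continuous_Rabs_comp, H. Qed.
Lemma Rcont_max0 f : Rcont f -> Rcont (fun x => Rmax 0 (f x)).
Proof.
  intros H. apply (Rcont_ext (fun x => / 2 * (f x + Rabs (f x)))).
  { intros x. unfold Rmax, Rabs; destruct Rle_dec; destruct Rcase_abs; lra. }
  apply Rcont_scal, Rcont_plus; auto. apply Rcont_abs; auto.
Qed.
Lemma Rcont_clamp_comp lo hi f : lo <= hi -> cont_within lo hi f ->
  Rcont (fun x => f (clamp lo hi x)).
Proof. intros; intros z; apply continuous_clamp_comp; auto. Qed.
Lemma Rcont_derivable f : (forall x, ex_derive f x) -> Rcont f.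
Proof. intros H x. apply (ex_derive_continuous (K:=R_AbsRing) (V:=R_NormedModule)). auto. Qed.

Lemma RInt_plusR f g a b : ex_RInt f a b -> ex_RInt g a b ->
  RInt (fun x => f x + g x) a b = RInt f a b + RInt g a b.
Proof. intros; apply (RInt_plus f g); auto. Qed.
Lemma RInt_scalR f a b k : ex_RInt f a b -> RInt (fun x => k * f x) a b = k * RInt f a b.
Proof. intros; apply (RInt_scal f a b k); auto. Qed.
Lemma RInt_minusR f g a b : ex_RInt f a b -> ex_RInt g a b ->
  RInt (fun x => f x - g x) a b = RInt f a b - RInt g a b.
Proof. intros; apply (RInt_minus f g); auto. Qed.
Lemma RInt_ChaslesR f a b c : ex_RInt f a b -> ex_RInt f b c ->
  RInt f a b + RInt f b c = RInt f a c.
Proof. intros; apply (RInt_Chasles f); auto. Qed.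
Lemma RInt_constR a b k : RInt (fun _ => k) a b = (b - a) * k.
Proof. rewrite RInt_const. reflexivity. Qed.
Lemma RInt_extR (f g : R -> R) a b :
  (forall x, Rmin a b < x < Rmax a b -> f x = g x) -> RInt f a b = RInt g a b.
Proof. intros; apply RInt_ext; auto. Qed.

Lemma RInt_abs_le_const f a b B : a <= b -> Rcont f ->
  (forall x, a <= x <= b -> Rabs (f x) <= B) -> Rabs (RInt f a b) <= (b - a) * B.
Proof. intros Hab Hf HB. apply abs_RInt_le_const; auto. apply ex_RInt_Rcont; auto. Qed.

Lemma RInt_leR f g a b : a <= b -> Rcont f -> Rcont g ->
  (forall x, a <= x <= b -> f x <= g x) -> RInt f a b <= RInt g a b.
Proof. intros. apply RInt_le; auto; try apply ex_RInt_Rcont; auto. intros; apply H2; lra. Qed.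

Lemma RInt_abs_le f g a b : a <= b -> Rcont f -> Rcont g ->
  (forall x, a <= x <= b -> Rabs (f x) <= g x) -> Rabs (RInt f a b) <= RInt g a b.
Proof.
  intros Hab Hf Hg H. eapply Rle_trans. apply abs_RInt_le; auto. apply ex_RInt_Rcont; auto.
  apply RInt_leR; auto. apply Rcont_abs; auto.
Qed.

Lemma RInt_ge0 f a b : a <= b -> Rcont f -> (forall x, a <= x <= b -> 0 <= f x) ->
  0 <= RInt f a b.
Proof. intros. apply RInt_ge_0; auto. apply ex_RInt_Rcont; auto. intros; apply H1; lra. Qed.

Lemma Rpower_pos x y : 0 < Rpower x y.
Proof. unfold Rpower; apply exp_pos. Qed.

Lemma Rpower_opp_le_base z1 z2 k : 0 <= k -> 0 < z1 <= z2 -> Rpower z2 (-k) <= Rpower z1 (-k).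
Proof.
  intros Hk Hz. rewrite !Rpower_Ropp. apply Rinv_le_contravar. apply Rpower_pos.
  apply Rle_Rpower_l; auto.
Qed.

Lemma is_derive_Rpower_base y x : 0 < x ->
  is_derive (fun z => Rpower z y) x (y * Rpower x (y - 1)).
Proof. intros; apply is_derive_Reals, derivable_pt_lim_power; auto. Qed.

Lemma continuous_Rpower_base y x : 0 < x -> continuous (fun z => Rpower z y) x.
Proof.
  intros H. apply (ex_derive_continuous (K:=R_AbsRing) (V:=R_NormedModule)).
  eexists. apply is_derive_Rpower_base; auto.
Qed.

Lemma Rpower_MVT y s t : 0 < s <= t -> exists xi, s <= xi <= t /\
  Rpower t y - Rpower s y = y * Rpower xi (y - 1) * (t - s).
Proof.
  intros Hs.
  destruct (MVT_gen (fun z => Rpower z y) s t (fun z => y * Rpower z (y-1))) as [xi [Hxi E]].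
  - intros x Hx. rewrite Rmin_left, Rmax_right in Hx by lra. apply is_derive_Rpower_base; lra.
  - intros x Hx. rewrite Rmin_left, Rmax_right in Hx by lra.
    apply continuity_pt_filterlim, continuous_Rpower_base; lra.
  - rewrite Rmin_left, Rmax_right in Hxi by lra. exists xi; split; auto.
Qed.

Lemma Rpower_opp_lipschitz g d s t : 0 < g -> 0 < d -> d <= s -> d <= t ->
  Rabs (Rpower s (-g) - Rpower t (-g)) <= g * Rpower d (-(g+1)) * Rabs (s - t).
Proof.
  intros Hg Hd Hs Ht.
  assert (key : forall s t, d <= s <= t ->
    Rabs (Rpower s (-g) - Rpower t (-g)) <= g * Rpower d (-(g+1)) * Rabs (s - t)).
  { clear s t Hs Ht. intros s t Hst.
    destruct (Rpower_MVT (-g) s t) as [xi [Hxi E]]. lra.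
    rewrite Rabs_minus_sym, E. replace (-g - 1) with (-(g+1)) by ring.
    rewrite !Rabs_mult, Rabs_Ropp, (Rabs_right g) by lra.
    rewrite (Rabs_right (Rpower xi _)) by (apply Rle_ge, Rlt_le, Rpower_pos).
    rewrite (Rabs_minus_sym s t).
    apply Rmult_le_compat_r. apply Rabs_pos. apply Rmult_le_compat_l. lra.
    apply Rpower_opp_le_base; lra. }
  destruct (Rle_dec s t). apply key; lra.
  rewrite Rabs_minus_sym, (Rabs_minus_sym s). apply key; lra.
Qed.

Lemma Rpower_opp_step g d h : 0 < g -> 0 < h -> h / 2 <= d ->
  h * g * Rpower d (-(g+1)) <= Rpower 3 (g+1) * (Rpower d (-g) - Rpower (d+h) (-g)).
Proof.
  intros Hg Hh Hd.
  destruct (Rpower_MVT (-g) d (d+h)) as [xi [Hxi E]]. lra.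
  replace (Rpower d (-g) - Rpower (d + h) (-g)) with (g * Rpower xi (-(g+1)) * h)
    by (replace (-(g+1)) with (-g-1) by ring; replace (d + h - d) with h in E by ring; lra).
  (* xi <= d + h <= 3 d *)
  assert (H3 : Rpower (3*d) (-(g+1)) <= Rpower xi (-(g+1))) by (apply Rpower_opp_le_base; lra).
  rewrite <- (Rpower_mult_distr 3 d), Rpower_Ropp in H3 by lra.
  assert (P3 : 0 < Rpower 3 (g+1)) by apply Rpower_pos.
  assert (Rpower d (-(g+1)) <= Rpower 3 (g+1) * Rpower xi (-(g+1))).
  { apply (Rmult_le_reg_l (/ Rpower 3 (g+1))). apply Rinv_0_lt_compat; auto.
    rewrite <- Rmult_assoc, Rinv_l, Rmult_1_l by lra. exact H3. }
  replace (Rpower 3 (g + 1) * (g * Rpower xi (- (g + 1)) * h)) with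
    ((h * g) * (Rpower 3 (g + 1) * Rpower xi (- (g + 1)))) by ring.
  apply Rmult_le_compat_l; auto. apply Rlt_le, Rmult_lt_0_compat; lra.
Qed.

Lemma Rpower_half_opp z g : 0 < z -> Rpower (z / 2) (-g) = Rpower 2 g * Rpower z (-g).
Proof.
  intros Hz. unfold Rdiv. rewrite <- Rpower_mult_distr by lra.
  rewrite Rmult_comm. f_equal. unfold Rpower. rewrite ln_Rinv by lra. f_equal; ring.
Qed.

Lemma Rpower_small k : 0 < k -> forall eta, 0 < eta -> exists delta, 0 < delta /\
  forall m, 0 < m < delta -> Rpower m k < eta.
Proof.
  intros Hk eta Heta. exists (Rpower eta (/ k)). split. apply Rpower_pos.
  intros m Hm. assert (E : Rpower (Rpower eta (/ k)) k = eta).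
  { rewrite Rpower_mult, Rinv_l, Rpower_1; auto; lra. }
  rewrite <- E. apply Rlt_Rpower_l; auto.
Qed.

Lemma Rmax_pos_l e z : 0 < e -> 0 < Rmax e z.
Proof. intros; eapply Rlt_le_trans; [eassumption| apply Rmax_l]. Qed.

Lemma Rcont_max_l e f : Rcont f -> Rcont (fun x => Rmax e (f x)).
Proof.
  intros Hf. apply (Rcont_ext (fun x => e + Rmax 0 (f x - e))).
  { intros z. unfold Rmax; repeat destruct Rle_dec; lra. }
  apply Rcont_plus. apply Rcont_const. apply Rcont_max0, Rcont_minus; auto. apply Rcont_const.
Qed.

Lemma Rcont_Rpower_comp f y : (forall x, 0 < f x) -> Rcont f -> Rcont (fun x => Rpower (f x) y).
Proof.
  intros Hpos Hf x. apply (continuous_comp f (fun z => Rpower z y)); auto.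
  apply continuous_Rpower_base; auto.
Qed.

Lemma RInt_Rpower_affine g k m s t : s <= t -> g <> 1 -> k <> 0 ->
  (forall x, s <= x <= t -> 0 < k * x + m) ->
  RInt (fun x => Rpower (k * x + m) (-g)) s t =
  (Rpower (k * t + m) (1 - g) - Rpower (k * s + m) (1 - g)) / (k * (1 - g)).
Proof.
  intros Hst Hg Hk Hpos.
  assert (Hd : forall x, s <= x <= t -> is_derive (fun z => Rpower (k * z + m) (1 - g)) x
                                         (k * ((1 - g) * Rpower (k * x + m) (1 - g - 1)))).
  { intros x Hx.
    apply (is_derive_comp (fun z => Rpower z (1 - g)) (fun z => k * z + m)).
    apply is_derive_Rpower_base; auto. auto_derive; auto; ring. }
  apply is_RInt_unique.
  apply (is_RInt_ext (V:=R_NormedModule)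
           (fun x => / (k * (1 - g)) * (k * ((1 - g) * Rpower (k * x + m) (1 - g - 1))))).
  { intros x Hx. simpl. replace (1 - g - 1) with (-g) by ring. field. split; auto. lra. }
  replace ((Rpower (k * t + m) (1 - g) - Rpower (k * s + m) (1 - g)) / (k * (1 - g)))
    with (scal (/ (k * (1 - g))) (minus (Rpower (k * t + m) (1 - g)) (Rpower (k * s + m) (1 - g)))).
  2:{ unfold Rdiv; rewrite Rmult_comm; reflexivity. }
  apply (is_RInt_scal (V:=R_NormedModule)).
  apply (is_RInt_derive (V:=R_CompleteNormedModule) (fun x => Rpower (k * x + m) (1 - g))).
  - intros x Hx. rewrite Rmin_left, Rmax_right in Hx by lra. apply Hd; auto.
  - intros x Hx. rewrite Rmin_left, Rmax_right in Hx by lra.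
    apply (continuous_comp (fun z => k * z + m) (fun z => k * ((1 - g) * Rpower z (1 - g - 1)))).
    apply Rcont_derivable; intros; auto_derive; auto.
    apply (continuous_scal_r k (fun z => (1 - g) * Rpower z (1 - g - 1))).
    apply (continuous_scal_r (1 - g) (fun z => Rpower z (1 - g - 1))).
    apply continuous_Rpower_base, Hpos; auto.
Qed.

(** * The truncated weight *)

Definition tweight (p g e x : R) : R := Rpower (Rmax e (Rabs (p - x))) (-g).

Lemma tweight_pos p g e x : 0 < tweight p g e x.
Proof. apply Rpower_pos. Qed.

Lemma Rcont_tweight p g e : 0 < e -> Rcont (tweight p g e).
Proof.
  intros He. apply Rcont_Rpower_comp. intros; apply Rmax_pos_l; auto.
  apply Rcont_max_l, Rcont_abs, Rcont_minus. apply Rcont_const. apply Rcont_id.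
Qed.

Lemma tweight_le p g e x : 0 < e -> 0 <= g -> tweight p g e x <= Rpower e (-g).
Proof. intros He Hg. apply Rpower_opp_le_base; auto. split; auto. apply Rmax_l. Qed.

Lemma tweight_eq p g e x : e <= Rabs (p - x) -> tweight p g e x = Rpower (Rabs (p - x)) (-g).
Proof. intros H. unfold tweight. rewrite Rmax_right; auto. Qed.

Lemma tweight_mirror p g e x : tweight p g e (2 * p - x) = tweight p g e x.
Proof. unfold tweight. do 2 f_equal. rewrite <- (Rabs_Ropp (p - x)). f_equal. ring. Qed.

Lemma tweight_le_shift p g e x : 0 < e -> 0 <= g ->
  tweight p g e x <= Rpower 2 g * Rpower (Rabs (p - x) + e) (-g).
Proof.
  intros He Hg. pose proof (Rabs_pos (p - x)). rewrite <- Rpower_half_opp by lra.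
  apply Rpower_opp_le_base; auto. split. lra.
  unfold Rmax; destruct Rle_dec; lra.
Qed.

Lemma tweight_int_ge p g e al h D : 0 < e -> 0 < g -> 0 < h -> e <= D ->
  (forall x, al <= x <= al + h -> Rabs (p - x) <= D) ->
  h * Rpower D (-g) <= RInt (tweight p g e) al (al + h).
Proof.
  intros He Hg Hh HeD Hx.
  replace (h * Rpower D (-g)) with (RInt (fun _ => Rpower D (-g)) al (al + h))
    by (rewrite RInt_constR; simpl; ring).
  apply RInt_leR. lra. apply Rcont_const. apply Rcont_tweight; auto.
  intros x Hxx. apply Rpower_opp_le_base. lra. split. apply Rmax_pos_l; auto.
  pose proof (Hx x Hxx). unfold Rmax; destruct Rle_dec; lra.
Qed.

Section WeightIntegrals.
Variables (p g e : R).
Hypothesis (Hg : 0 < g < 1) (He : 0 < e).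

Let Kg := Rpower 2 g / (1 - g).

Lemma Rcont_Rpower_max_affine k m : Rcont (fun x => Rpower (Rmax e (k * x + m)) (-g)).
Proof.
  apply Rcont_Rpower_comp. intros; apply Rmax_pos_l; auto.
  apply Rcont_max_l, Rcont_derivable. intros; auto_derive; auto.
Qed.

Lemma tweight_int_right s t : p <= s <= t ->
  RInt (tweight p g e) s t <= Kg * (Rpower (t - p + e) (1 - g) - Rpower (s - p + e) (1 - g)).
Proof.
  intros Hst.
  (* [Rmax e] is inactive on [[s, t]]; it only makes the comparison function continuous *)
  apply Rle_trans with (RInt (fun x => Rpower 2 g * Rpower (Rmax e (1 * x + (e - p))) (-g)) s t).
  - apply RInt_leR. lra. apply Rcont_tweight; auto. apply Rcont_scal, Rcont_Rpower_max_affine.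
    intros x Hx. eapply Rle_trans. apply tweight_le_shift; lra.
    rewrite Rmax_right, Rabs_left1 by lra. right; do 2 f_equal; ring.
  - rewrite RInt_scalR by apply ex_RInt_Rcont, Rcont_Rpower_max_affine.
    rewrite (RInt_extR _ (fun x => Rpower (1 * x + (e - p)) (-g))).
    2:{ intros x Hx. rewrite Rmin_left, Rmax_right in Hx by lra. rewrite Rmax_right by lra. auto. }
    rewrite RInt_Rpower_affine; try lra. 2: intros; lra.
    right. unfold Kg. replace (1 * t + (e - p)) with (t - p + e) by ring.
    replace (1 * s + (e - p)) with (s - p + e) by ring. field. lra.
Qed.

Lemma tweight_int_left s t : s <= t <= p ->
  RInt (tweight p g e) s t <= Kg * (Rpower (p - s + e) (1 - g) - Rpower (p - t + e) (1 - g)).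
Proof.
  intros Hst.
  apply Rle_trans with (RInt (fun x => Rpower 2 g * Rpower (Rmax e ((-1) * x + (p + e))) (-g)) s t).
  - apply RInt_leR. lra. apply Rcont_tweight; auto. apply Rcont_scal, Rcont_Rpower_max_affine.
    intros x Hx. eapply Rle_trans. apply tweight_le_shift; lra.
    rewrite Rmax_right, Rabs_right by lra. right; do 2 f_equal; ring.
  - rewrite RInt_scalR by apply ex_RInt_Rcont, Rcont_Rpower_max_affine.
    rewrite (RInt_extR _ (fun x => Rpower ((-1) * x + (p + e)) (-g))).
    2:{ intros x Hx. rewrite Rmin_left, Rmax_right in Hx by lra. rewrite Rmax_right by lra. auto. }
    rewrite RInt_Rpower_affine; try lra. 2: intros; lra.
    right. unfold Kg. replace (-1 * t + (p + e)) with (p - t + e) by ring.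
    replace (-1 * s + (p + e)) with (p - s + e) by ring. field. lra.
Qed.

Lemma tweight_int_le lo hi : lo <= p <= hi ->
  RInt (tweight p g e) lo hi <= Kg * (Rpower (p - lo + e) (1 - g) + Rpower (hi - p + e) (1 - g)).
Proof.
  intros H. rewrite <- (RInt_ChaslesR _ lo p hi) by (apply ex_RInt_Rcont, Rcont_tweight; auto).
  pose proof (tweight_int_left lo p). pose proof (tweight_int_right p hi).
  assert (0 < Kg) by (apply Rdiv_lt_0_compat; [apply Rpower_pos|lra]).
  pose proof (Rpower_pos (p - p + e) (1 - g)). nra.
Qed.

End WeightIntegrals.

(** A bound for the total weight, uniform in the singular point and the truncation. *)
Definition tweight_mass (lo hi g : R) : R :=
  Rpower 2 g / (1 - g) * (2 * Rpower (2 * (hi - lo)) (1 - g)).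

Lemma tweight_mass_ge0 lo hi g : 0 < g < 1 -> 0 <= tweight_mass lo hi g.
Proof.
  intros Hg. unfold tweight_mass. apply Rmult_le_pos. apply Rlt_le, Rdiv_lt_0_compat.
  apply Rpower_pos. lra. pose proof (Rpower_pos (2 * (hi - lo)) (1 - g)). lra.
Qed.

Lemma tweight_int_le_mass lo hi p g e : 0 < g < 1 -> lo <= p <= hi -> 0 < e <= hi - lo ->
  RInt (tweight p g e) lo hi <= tweight_mass lo hi g.
Proof.
  intros Hg Hp He. eapply Rle_trans. apply tweight_int_le; auto; lra.
  unfold tweight_mass. apply Rmult_le_compat_l.
  apply Rlt_le, Rdiv_lt_0_compat. apply Rpower_pos. lra.
  assert (Rpower (p - lo + e) (1 - g) <= Rpower (2 * (hi - lo)) (1 - g))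
    by (apply Rle_Rpower_l; lra).
  assert (Rpower (hi - p + e) (1 - g) <= Rpower (2 * (hi - lo)) (1 - g))
    by (apply Rle_Rpower_l; lra).
  lra.
Qed.

(** * Truncated integrals and the weakly singular integral *)

Definition lim0 (J : R -> R) (v : R) : Prop :=
  forall eta, 0 < eta -> exists delta, 0 < delta /\
    forall e, 0 < e < delta -> Rabs (J e - v) < eta.

Lemma lim0_unique J v w : lim0 J v -> lim0 J w -> v = w.
Proof.
  intros H1 H2. destruct (Req_dec v w) as [|Hne]; auto. exfalso.
  set (eta := Rabs (v - w) / 2).
  assert (Heta : 0 < eta) by (apply Rdiv_lt_0_compat; [apply Rabs_pos_lt; lra| lra]).
  destruct (H1 eta Heta) as [d1 [Hd1 K1]]. destruct (H2 eta Heta) as [d2 [Hd2 K2]].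
  set (e := Rmin d1 d2 / 2). assert (0 < Rmin d1 d2) by (apply Rmin_pos; auto).
  specialize (K1 e ltac:(unfold e; pose proof (Rmin_l d1 d2); lra)).
  specialize (K2 e ltac:(unfold e; pose proof (Rmin_r d1 d2); lra)).
  assert (Rabs (v - w) <= Rabs (J e - v) + Rabs (J e - w)).
  { replace (v - w) with (-(J e - v) + (J e - w)) by ring. eapply Rle_trans. apply Rabs_triang.
    rewrite Rabs_Ropp. lra. }
  unfold eta in *. lra.
Qed.

Lemma lim0_ext J J' v d : 0 < d -> (forall e, 0 < e < d -> J e = J' e) -> lim0 J v -> lim0 J' v.
Proof.
  intros Hd E H eta Heta. destruct (H eta Heta) as [d1 [Hd1 K]].
  exists (Rmin d d1); split. apply Rmin_pos; auto.
  intros e He. pose proof (Rmin_l d d1). pose proof (Rmin_r d d1).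
  rewrite <- E by lra. apply K. lra.
Qed.

Lemma lim0_plus J1 J2 v1 v2 : lim0 J1 v1 -> lim0 J2 v2 -> lim0 (fun e => J1 e + J2 e) (v1 + v2).
Proof.
  intros H1 H2 eta Heta.
  destruct (H1 (eta/2)) as [d1 [Hd1 K1]]; [lra|]. destruct (H2 (eta/2)) as [d2 [Hd2 K2]]; [lra|].
  exists (Rmin d1 d2); split. apply Rmin_pos; auto.
  intros e He. pose proof (Rmin_l d1 d2). pose proof (Rmin_r d1 d2).
  specialize (K1 e ltac:(lra)). specialize (K2 e ltac:(lra)).
  replace (J1 e + J2 e - (v1 + v2)) with ((J1 e - v1) + (J2 e - v2)) by ring.
  eapply Rle_lt_trans. apply Rabs_triang. lra.
Qed.

Lemma lim0_bound J v B e0 : 0 < e0 -> (forall e, 0 < e < e0 -> Rabs (J e) <= B) ->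
  lim0 J v -> Rabs v <= B.
Proof.
  intros He0 HB H. apply Rnot_lt_le. intros Hlt.
  destruct (H (Rabs v - B)) as [d [Hd K]]. lra.
  set (e := Rmin d e0 / 2). assert (0 < Rmin d e0) by (apply Rmin_pos; auto).
  specialize (K e ltac:(unfold e; pose proof (Rmin_l d e0); lra)).
  specialize (HB e ltac:(unfold e; pose proof (Rmin_r d e0); lra)).
  assert (Rabs v <= Rabs (J e) + Rabs (J e - v)).
  { replace v with (J e - (J e - v)) at 1 by ring. eapply Rle_trans. apply Rabs_triang.
    rewrite Rabs_Ropp. lra. }
  lra.
Qed.

Lemma lim0_cauchy J : (forall eta, 0 < eta -> exists delta, 0 < delta /\
    forall e e', 0 < e < delta -> 0 < e' < delta -> Rabs (J e - J e') < eta) ->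
  exists v, lim0 J v.
Proof.
  intros HC.
  assert (Hsmall : forall delta, 0 < delta -> exists N, forall n, (n >= N)%nat ->
            0 < / (INR n + 1) < delta).
  { intros delta Hd. destruct (INR_archimed delta 1 Hd) as [N HN]. exists N. intros n Hn.
    apply le_INR in Hn. pose proof (pos_INR N).
    split. apply Rinv_0_lt_compat; lra.
    apply (Rmult_lt_reg_r (INR n + 1)). lra. rewrite Rinv_l by lra. nra. }
  set (u := fun n : nat => J (/ (INR n + 1))).
  assert (Cu : Cauchy_crit u).
  { intros eta Heta. destruct (HC eta Heta) as [d [Hd K]]. destruct (Hsmall d Hd) as [N HN].
    exists N. intros n m Hn Hm. apply K; auto. }
  destruct (Rcomplete.R_complete u Cu) as [v Hv].
  exists v. intros eta Heta.
  destruct (HC (eta/2)) as [d [Hd K]]. lra.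
  destruct (Hv (eta/2)) as [N1 HN1]. lra.
  destruct (Hsmall d Hd) as [N2 HN2].
  exists d. split; auto. intros e He.
  specialize (HN1 (N1 + N2)%nat ltac:(lia)). specialize (HN2 (N1 + N2)%nat ltac:(lia)).
  unfold Rdist, u in HN1.
  specialize (K e _ He HN2).
  replace (J e - v) with ((J e - J (/ (INR (N1 + N2) + 1))) + (J (/ (INR (N1 + N2) + 1)) - v))
    by ring.
  eapply Rle_lt_trans. apply Rabs_triang. lra.
Qed.

(** [F] only matters on [[lo, hi]]; clamping makes the integrand continuous on the whole line. *)
Definition trunc_int (lo hi p g : R) (F : R -> R) (e : R) : R :=
  RInt (fun x => F (clamp lo hi x) * tweight p g e x) lo hi.

Section TruncInt.
Variables (lo hi p g : R).
Hypothesis (Hlp : lo < p) (Hph : p < hi) (Hg : 0 < g < 1).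

Lemma Rcont_trunc_integrand F e : 0 < e -> cont_within lo hi F ->
  Rcont (fun x => F (clamp lo hi x) * tweight p g e x).
Proof.
  intros He HF. apply Rcont_mult. apply Rcont_clamp_comp; auto; lra. apply Rcont_tweight; auto.
Qed.

Lemma trunc_int_ext F G e : (forall x, lo <= x <= hi -> F x = G x) ->
  trunc_int lo hi p g F e = trunc_int lo hi p g G e.
Proof.
  intros E. apply RInt_extR. intros x Hx. rewrite E. auto. apply clamp_in; lra.
Qed.

Lemma trunc_int_plus F G e : 0 < e -> cont_within lo hi F -> cont_within lo hi G ->
  trunc_int lo hi p g (fun x => F x + G x) e = trunc_int lo hi p g F e + trunc_int lo hi p g G e.
Proof.
  intros He HF HG. unfold trunc_int.
  rewrite <- RInt_plusR; try (apply ex_RInt_Rcont, Rcont_trunc_integrand; auto).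
  apply RInt_extR. intros; ring.
Qed.

Lemma trunc_int_scal F k e : 0 < e -> cont_within lo hi F ->
  trunc_int lo hi p g (fun x => k * F x) e = k * trunc_int lo hi p g F e.
Proof.
  intros He HF. unfold trunc_int.
  rewrite <- RInt_scalR; try (apply ex_RInt_Rcont, Rcont_trunc_integrand; auto).
  apply RInt_extR. intros; ring.
Qed.

Lemma trunc_int_bound F B e : 0 < e <= hi - lo -> cont_within lo hi F ->
  (forall x, lo <= x <= hi -> Rabs (F x) <= B) ->
  Rabs (trunc_int lo hi p g F e) <= B * tweight_mass lo hi g.
Proof.
  intros He HF HB.
  assert (B0 : 0 <= B) by (eapply Rle_trans; [apply Rabs_pos| apply (HB lo); lra]).
  eapply Rle_trans. apply (RInt_abs_le _ (fun x => B * tweight p g e x)). lra.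
  apply Rcont_trunc_integrand; auto; lra. apply Rcont_scal, Rcont_tweight; lra.
  { intros x Hx. rewrite Rabs_mult, (Rabs_right (tweight _ _ _ _))
      by (apply Rle_ge, Rlt_le, tweight_pos).
    apply Rmult_le_compat_r. apply Rlt_le, tweight_pos. apply HB, clamp_in; lra. }
  rewrite RInt_scalR by (apply ex_RInt_Rcont, Rcont_tweight; lra).
  apply Rmult_le_compat_l; auto. apply tweight_int_le_mass; lra.
Qed.

(** The weights for [e] and [e'] agree off [[p - e', p + e']], where the integrand is
    [O(e'^(-g))] on a set of length [O(e')]. *)
Lemma trunc_int_cauchy F B e e' : 0 < e <= e' -> e' <= Rmin (p - lo) (hi - p) ->
  cont_within lo hi F -> (forall x, lo <= x <= hi -> Rabs (F x) <= B) ->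
  Rabs (trunc_int lo hi p g F e - trunc_int lo hi p g F e')
    <= B * (4 * (Rpower 2 g / (1 - g)) * Rpower (2 * e') (1 - g)).
Proof.
  intros He He' HF HB.
  assert (B0 : 0 <= B) by (eapply Rle_trans; [apply Rabs_pos| apply (HB lo); lra]).
  assert (M1 : e' <= p - lo) by (eapply Rle_trans; [apply He'| apply Rmin_l]).
  assert (M2 : e' <= hi - p) by (eapply Rle_trans; [apply He'| apply Rmin_r]).
  set (H := fun x => F (clamp lo hi x) * (tweight p g e x - tweight p g e' x)).
  assert (GH : Rcont H).
  { apply Rcont_mult. apply Rcont_clamp_comp; auto; lra.
    apply Rcont_minus; apply Rcont_tweight; lra. }
  assert (Zero : forall s t, s <= t -> (t <= p - e' \/ p + e' <= s) -> RInt H s t = 0).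
  { intros s t Hst Hside. rewrite (RInt_extR _ (fun _ => 0)), RInt_constR. simpl; ring.
    intros x Hx. rewrite Rmin_left, Rmax_right in Hx by lra. unfold H.
    rewrite !tweight_eq. ring.
    all: destruct Hside; [rewrite Rabs_right| rewrite Rabs_left]; lra. }
  replace (trunc_int lo hi p g F e - trunc_int lo hi p g F e')
    with (RInt H lo (p - e') + RInt H (p - e') (p + e') + RInt H (p + e') hi).
  2:{ unfold trunc_int. rewrite <- RInt_minusR by (apply ex_RInt_Rcont, Rcont_trunc_integrand; auto; lra).
      rewrite !RInt_ChaslesR by (apply ex_RInt_Rcont; auto). apply RInt_extR. intros; unfold H; ring. }
  rewrite (Zero lo (p - e')), (Zero (p + e') hi) by lra. rewrite Rplus_0_l, Rplus_0_r.
  eapply Rle_trans.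
  { apply (RInt_abs_le _ (fun x => B * (tweight p g e x + tweight p g e' x))). lra. auto.
    apply Rcont_scal, Rcont_plus; apply Rcont_tweight; lra.
    intros x Hx. unfold H. rewrite Rabs_mult. apply Rmult_le_compat; try apply Rabs_pos.
    apply HB, clamp_in; lra. pose proof (tweight_pos p g e x). pose proof (tweight_pos p g e' x).
    unfold Rabs; destruct Rcase_abs; lra. }
  rewrite RInt_scalR, RInt_plusR by (apply ex_RInt_Rcont; try apply Rcont_plus;
                                      apply Rcont_tweight; lra).
  apply Rmult_le_compat_l; auto.
  pose proof (tweight_int_le p g e Hg (proj1 He) (p - e') (p + e') ltac:(lra)).
  pose proof (tweight_int_le p g e' Hg ltac:(lra) (p - e') (p + e') ltac:(lra)).
  assert (Rpower (p - (p - e') + e) (1 - g) <= Rpower (2 * e') (1 - g)) by (apply Rle_Rpower_l; lra).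
  assert (Rpower (p + e' - p + e) (1 - g) <= Rpower (2 * e') (1 - g)) by (apply Rle_Rpower_l; lra).
  assert (Rpower (p - (p - e') + e') (1 - g) <= Rpower (2 * e') (1 - g)) by (apply Rle_Rpower_l; lra).
  assert (Rpower (p + e' - p + e') (1 - g) <= Rpower (2 * e') (1 - g)) by (apply Rle_Rpower_l; lra).
  assert (0 < Rpower 2 g / (1 - g)) by (apply Rdiv_lt_0_compat; [apply Rpower_pos| lra]).
  nra.
Qed.

Lemma trunc_int_converges F : cont_within lo hi F -> exists v, lim0 (trunc_int lo hi p g F) v.
Proof.
  intros HF. apply lim0_cauchy.
  destruct (cont_within_bounded lo hi F) as [B [B0 HB]]; auto; try lra.
  set (K := B * (4 * (Rpower 2 g / (1 - g)))).
  assert (K0 : 0 <= K).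
  { unfold K. apply Rmult_le_pos; auto. apply Rmult_le_pos. lra.
    apply Rlt_le, Rdiv_lt_0_compat; [apply Rpower_pos| lra]. }
  intros eta Heta.
  destruct (Rpower_small (1 - g) ltac:(lra) (eta / (K + 1))) as [d [Hd Hs]].
  { apply Rdiv_lt_0_compat; lra. }
  exists (Rmin (d / 2) (Rmin (p - lo) (hi - p))). split.
  { apply Rmin_pos. lra. apply Rmin_pos; lra. }
  assert (Key : forall e e', 0 < e <= e' -> e' < Rmin (d / 2) (Rmin (p - lo) (hi - p)) ->
            Rabs (trunc_int lo hi p g F e - trunc_int lo hi p g F e') < eta).
  { intros e e' He He'. pose proof (Rmin_l (d / 2) (Rmin (p - lo) (hi - p))).
    pose proof (Rmin_r (d / 2) (Rmin (p - lo) (hi - p))).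
    eapply Rle_lt_trans. apply (trunc_int_cauchy F B); auto; lra.
    specialize (Hs (2 * e') ltac:(lra)).
    replace (B * (4 * (Rpower 2 g / (1 - g)) * Rpower (2 * e') (1 - g)))
      with (K * Rpower (2 * e') (1 - g)) by (unfold K; ring).
    apply Rle_lt_trans with (K * (eta / (K + 1))). { apply Rmult_le_compat_l; lra. }
    apply (Rmult_lt_reg_r (K + 1)). lra. unfold Rdiv.
    rewrite Rmult_assoc, (Rmult_assoc eta), Rinv_l by lra. nra. }
  intros e e' He He'. destruct (Rle_dec e e').
  - apply Key; lra.
  - rewrite Rabs_minus_sym. apply Key; lra.
Qed.

End TruncInt.

(** [pv F] is the limit of the truncated integrals; it is meaningful only for continuous [F]
    and an interior singular point [p] (see [pv_spec]). *)
Definition pv (lo hi p g : R) (F : R -> R) : R :=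
  epsilon (inhabits 0) (lim0 (trunc_int lo hi p g F)).

Section PV.
Variables (lo hi p g : R).
Hypothesis (Hlp : lo < p) (Hph : p < hi) (Hg : 0 < g < 1).

Lemma pv_spec F : cont_within lo hi F -> lim0 (trunc_int lo hi p g F) (pv lo hi p g F).
Proof. intros HF. unfold pv. apply epsilon_spec, trunc_int_converges; auto. Qed.

Lemma pv_eq F v : cont_within lo hi F -> lim0 (trunc_int lo hi p g F) v -> pv lo hi p g F = v.
Proof. intros HF Hv. apply (lim0_unique (trunc_int lo hi p g F)); auto. apply pv_spec; auto. Qed.

Lemma pv_ext F G : cont_within lo hi F -> (forall x, lo <= x <= hi -> F x = G x) ->
  pv lo hi p g F = pv lo hi p g G.
Proof.
  intros HF E. symmetry. apply pv_eq. apply (cont_within_ext _ _ F); auto.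
  apply (lim0_ext (trunc_int lo hi p g F) _ _ 1). lra.
  intros; apply trunc_int_ext; auto. apply pv_spec; auto.
Qed.

Lemma pv_plus F G : cont_within lo hi F -> cont_within lo hi G ->
  pv lo hi p g (fun x => F x + G x) = pv lo hi p g F + pv lo hi p g G.
Proof.
  intros HF HG. apply pv_eq. apply cont_within_plus; auto.
  apply (lim0_ext (fun e => trunc_int lo hi p g F e + trunc_int lo hi p g G e) _ _ 1). lra.
  intros; symmetry; apply trunc_int_plus; auto; lra.
  apply lim0_plus; apply pv_spec; auto.
Qed.

Lemma pv_scal F k : cont_within lo hi F ->
  pv lo hi p g (fun x => k * F x) = k * pv lo hi p g F.
Proof.
  intros HF. apply pv_eq. apply cont_within_scal; auto.
  apply (lim0_ext (fun e => k * trunc_int lo hi p g F e) _ _ 1). lra.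
  intros; symmetry; apply trunc_int_scal; auto; lra.
  intros eta Heta. assert (Hk : 0 < Rabs k + 1) by (pose proof (Rabs_pos k); lra).
  destruct (pv_spec F HF (eta / (Rabs k + 1))) as [d [Hd K]]. apply Rdiv_lt_0_compat; auto.
  exists d; split; auto. intros e He. specialize (K e He).
  rewrite <- Rmult_minus_distr_l, Rabs_mult.
  apply Rle_lt_trans with (Rabs k * (eta / (Rabs k + 1))).
  { apply Rmult_le_compat_l; [apply Rabs_pos| lra]. }
  apply (Rmult_lt_reg_r (Rabs k + 1)); auto. unfold Rdiv.
  rewrite Rmult_assoc, (Rmult_assoc eta), Rinv_l by lra. nra.
Qed.

Lemma pv_minus F G : cont_within lo hi F -> cont_within lo hi G ->
  pv lo hi p g (fun x => F x - G x) = pv lo hi p g F - pv lo hi p g G.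
Proof.
  intros HF HG. rewrite (pv_ext _ (fun x => F x + -1 * G x)).
  rewrite pv_plus, pv_scal; auto. ring. apply cont_within_scal; auto.
  apply cont_within_minus; auto. intros; ring.
Qed.

Lemma pv_sum (F : nat -> R -> R) (c : nat -> R) n :
  (forall l, (l <= n)%nat -> cont_within lo hi (F l)) ->
  pv lo hi p g (fun x => sum_f_R0 (fun l => c l * F l x) n) = sum_f_R0 (fun l => c l * pv lo hi p g (F l)) n.
Proof.
  induction n; intros HF; simpl.
  - apply pv_scal, HF; lia.
  - rewrite pv_plus, pv_scal, IHn; auto.
    all: try apply cont_within_sum; intros; try apply cont_within_scal; apply HF; lia.
Qed.

Lemma pv_bound F B : cont_within lo hi F -> (forall x, lo <= x <= hi -> Rabs (F x) <= B) ->
  Rabs (pv lo hi p g F) <= B * tweight_mass lo hi g.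
Proof.
  intros HF HB. apply (lim0_bound (trunc_int lo hi p g F) _ _ (hi - lo)). lra.
  intros e He. apply trunc_int_bound; auto; lra. apply pv_spec; auto.
Qed.

Lemma pv_bound_of_trunc F B e0 : 0 < e0 -> cont_within lo hi F ->
  (forall e, 0 < e < e0 -> Rabs (trunc_int lo hi p g F e) <= B) -> Rabs (pv lo hi p g F) <= B.
Proof. intros He0 HF HB. apply (lim0_bound (trunc_int lo hi p g F) _ _ e0); auto. apply pv_spec; auto. Qed.

Lemma pv_cont_param c d (F : R -> R -> R) :
  (forall y, c <= y <= d -> cont_within lo hi (F y)) ->
  (forall eps, 0 < eps -> exists delta, 0 < delta /\ forall y y', c <= y <= d -> c <= y' <= d ->
     Rabs (y' - y) < delta -> forall x, lo <= x <= hi -> Rabs (F y' x - F y x) <= eps) ->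
  cont_within c d (fun y => pv lo hi p g (F y)).
Proof.
  intros HF Heq y0 Hy0 eps Heps.
  set (W := tweight_mass lo hi g). assert (W0 : 0 <= W) by (apply tweight_mass_ge0; auto).
  destruct (Heq (eps / (W + 1))) as [d0 [Hd0 K]]. apply Rdiv_lt_0_compat; lra.
  exists d0. split; auto. intros y' Hy' Hyy.
  rewrite <- pv_minus by auto.
  eapply Rle_lt_trans. apply pv_bound. apply cont_within_minus; auto.
  intros x Hx. apply K; auto. fold W.
  replace (eps / (W + 1) * W) with (eps - eps / (W + 1)) by (field; lra).
  assert (0 < eps / (W + 1)) by (apply Rdiv_lt_0_compat; lra). lra.
Qed.

Lemma tweight_off_core e x : 0 < e -> Rabs (p - x) >= e ->
  tweight p g e x = / Rpower (Rabs (p - x)) g.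
Proof. intros He Hx. rewrite tweight_eq, Rpower_Ropp by lra. reflexivity. Qed.

Lemma trunc_int_core_bound F B e : 0 < e -> cont_within lo hi F ->
  (forall x, lo <= x <= hi -> Rabs (F x) <= B) ->
  Rabs (RInt (fun x => F (clamp lo hi x) * tweight p g e x) (p - e) (p + e)) <= 2 * B * Rpower e (1 - g).
Proof.
  intros He HF HB.
  replace (2 * B * Rpower e (1 - g)) with ((p + e - (p - e)) * (B * Rpower e (-g))).
  2:{ unfold Rminus at 3. rewrite Rpower_plus, Rpower_1 by lra. ring. }
  apply RInt_abs_le_const. lra. apply Rcont_trunc_integrand; auto.
  intros x Hx. rewrite Rabs_mult, (Rabs_right (tweight _ _ _ _)) by (apply Rle_ge, Rlt_le, tweight_pos).
  apply Rmult_le_compat. apply Rabs_pos. apply Rlt_le, tweight_pos. apply HB, clamp_in; lra.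
  apply tweight_le; lra.
Qed.

(** Off [[p - e, p + e]] the truncated integrand is the true one, and the remaining
    piece is [O(e^(1 - g))]. *)
Lemma sing_int_pv F : cont_within lo hi F ->
  sing_int (fun x => F x / Rpower (Rabs (p - x)) g) lo hi p (pv lo hi p g F).
Proof.
  intros HF eps Heps.
  destruct (cont_within_bounded lo hi F) as [B [B0 HB]]; auto; try lra.
  destruct (pv_spec F HF (eps / 2)) as [d1 [Hd1 K1]]. lra.
  destruct (Rpower_small (1 - g) ltac:(lra) (eps / (2 * (2 * B + 1)))) as [d2 [Hd2 K2]].
  { apply Rdiv_lt_0_compat; lra. }
  set (d0 := Rmin (Rmin d1 d2) (Rmin (p - lo) (hi - p))).
  assert (Hd0 : 0 < d0) by (unfold d0; repeat apply Rmin_pos; lra).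
  exists d0. split; auto. intros e He.
  assert (e < d1 /\ e < d2 /\ e < p - lo /\ e < hi - p) as (Ha & Hb & M1 & M2).
  { unfold d0 in He. pose proof (Rmin_l (Rmin d1 d2) (Rmin (p - lo) (hi - p))).
    pose proof (Rmin_r (Rmin d1 d2) (Rmin (p - lo) (hi - p))).
    pose proof (Rmin_l d1 d2). pose proof (Rmin_r d1 d2).
    pose proof (Rmin_l (p - lo) (hi - p)). pose proof (Rmin_r (p - lo) (hi - p)). lra. }
  set (Fw := fun x => F (clamp lo hi x) * tweight p g e x).
  assert (GF : Rcont Fw) by (apply Rcont_trunc_integrand; auto; lra).
  set (f := fun x => F x / Rpower (Rabs (p - x)) g).
  assert (Away : forall s t, lo <= s -> t <= hi -> s <= t -> (t <= p - e \/ p + e <= s) ->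
     forall x, Rmin s t < x < Rmax s t -> Fw x = f x).
  { intros s t Hs Ht Hst Hside x Hx. rewrite Rmin_left, Rmax_right in Hx by lra.
    unfold Fw, f. rewrite clamp_id, tweight_off_core by
      (lra || (destruct Hside; [rewrite Rabs_right| rewrite Rabs_left]; lra)). reflexivity. }
  assert (X1 : ex_RInt f lo (p - e))
    by (apply (ex_RInt_ext Fw); [apply Away; lra| apply ex_RInt_Rcont; auto]).
  assert (X2 : ex_RInt f (p + e) hi)
    by (apply (ex_RInt_ext Fw); [apply Away; lra| apply ex_RInt_Rcont; auto]).
  exists (RInt f lo (p - e)), (RInt f (p + e) hi).
  split. { exists (ex_RInt_Reals_0 _ _ _ X1). rewrite <- RInt_Reals. reflexivity. }
  split. { exists (ex_RInt_Reals_0 _ _ _ X2). rewrite <- RInt_Reals. reflexivity. }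
  rewrite <- (RInt_extR Fw f lo (p - e)), <- (RInt_extR Fw f (p + e) hi) by (apply Away; lra).
  pose proof (trunc_int_core_bound F B e (proj1 He) HF HB) as Mid. fold Fw in Mid.
  specialize (K1 e (conj (proj1 He) Ha)). specialize (K2 e (conj (proj1 He) Hb)).
  assert (2 * B * Rpower e (1 - g) <= 2 * B * (eps / (2 * (2 * B + 1)))) by (apply Rmult_le_compat_l; lra).
  assert (2 * B * (eps / (2 * (2 * B + 1))) < eps / 2).
  { apply (Rmult_lt_reg_r (2 * (2 * B + 1))). lra. unfold Rdiv.
    rewrite Rmult_assoc, (Rmult_assoc eps), Rinv_l by lra. nra. }
  replace (RInt Fw lo (p - e) + RInt Fw (p + e) hi - pv lo hi p g F) with
    ((trunc_int lo hi p g F e - pv lo hi p g F) - RInt Fw (p - e) (p + e)).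
  2:{ unfold trunc_int. fold Fw. rewrite <- (RInt_ChaslesR Fw lo (p - e) hi),
        <- (RInt_ChaslesR Fw (p - e) (p + e) hi) by (apply ex_RInt_Rcont; auto). ring. }
  eapply Rle_lt_trans. apply Rabs_triang. rewrite Rabs_Ropp. lra.
Qed.

End PV.

(** * Taylor expansion to fourth order *)

Lemma MVT_pow_bound lo hi f df c x B n : lo <= hi -> 0 <= B -> cont_within lo hi f ->
  (forall t, lo < t < hi -> is_derive f t (df t)) -> lo <= c <= hi -> lo <= x <= hi ->
  (forall t, Rmin c x <= t <= Rmax c x -> Rabs (df t) <= B * Rabs (t - c) ^ n) ->
  Rabs (f x - f c) <= B * Rabs (x - c) ^ (S n).
Proof.
  intros Hlh HB Hf Hd Hc Hx Hb.
  destruct (MVT_gen (fun t => f (clamp lo hi t)) c x df) as [xi [Hxi E]].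
  - intros t Ht.
    assert (Ht' : lo < t < hi) by (unfold Rmin, Rmax in Ht; destruct Rle_dec; lra).
    apply (is_derive_ext_loc f); [|apply Hd; auto].
    assert (Hr : 0 < Rmin (t - lo) (hi - t)) by (apply Rmin_pos; lra).
    exists (mkposreal _ Hr). intros y Hy. simpl in Hy. unfold ball in Hy; simpl in Hy.
    unfold AbsRing_ball, abs, minus, plus, opp in Hy; simpl in Hy.
    pose proof (Rmin_l (t - lo) (hi - t)). pose proof (Rmin_r (t - lo) (hi - t)).
    rewrite clamp_id; auto. unfold Rabs in Hy; destruct Rcase_abs; lra.
  - intros t _. apply continuity_pt_filterlim, continuous_clamp_comp; auto.
  - simpl in E. rewrite !clamp_id in E by auto. rewrite E, Rabs_mult. simpl.
    rewrite (Rmult_comm (Rabs (x - c))), <- Rmult_assoc.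
    apply Rmult_le_compat_r. apply Rabs_pos.
    eapply Rle_trans. apply Hb; auto. apply Rmult_le_compat_l; auto.
    apply pow_incr. split. apply Rabs_pos.
    unfold Rmin, Rmax in Hxi; destruct Rle_dec; unfold Rabs; repeat destruct Rcase_abs; lra.
Qed.

(** [f k] plays the role of the [k]-th derivative of [f 0]. *)
Definition smooth4_on (lo hi : R) (f : nat -> R -> R) : Prop :=
  (forall k, (k <= 3)%nat -> cont_within lo hi (f k)) /\
  (forall k, (k <= 3)%nat -> forall t, lo < t < hi -> is_derive (f k) t (f (S k) t)).

Section Taylor.
Variables (lo hi : R) (f : nat -> R -> R) (K : R).
Hypothesis (Hlh : lo < hi) (Hf : smooth4_on lo hi f)
           (HK : forall t, lo <= t <= hi -> Rabs (f 4%nat t) <= K).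

Lemma smooth4_bound_ge0 : 0 <= K.
Proof. eapply Rle_trans. apply Rabs_pos. apply (HK lo). lra. Qed.

Lemma between_in c x t : lo <= c <= hi -> lo <= x <= hi -> Rmin c x <= t <= Rmax c x ->
  lo <= t <= hi.
Proof. intros; unfold Rmin, Rmax in *; destruct Rle_dec; lra. Qed.

Lemma taylor_order1 c x : lo <= c <= hi -> lo <= x <= hi ->
  Rabs (f 3%nat x - f 3%nat c) <= K * Rabs (x - c).
Proof.
  intros Hc Hx. rewrite <- (pow_1 (Rabs (x - c))).
  apply (MVT_pow_bound lo hi _ (f 4%nat) c x K 0); auto; try lra.
  apply smooth4_bound_ge0. apply (proj1 Hf); lia. apply (proj2 Hf); lia.
  intros t Ht. rewrite pow_O, Rmult_1_r. apply HK, (between_in c x t); auto.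
Qed.

Lemma taylor_order4 c x : lo <= c <= hi -> lo <= x <= hi ->
  Rabs (f 0%nat x - (f 0%nat c + f 1%nat c * (x - c) + f 2%nat c / 2 * (x - c) ^ 2
                     + f 3%nat c / 6 * (x - c) ^ 3)) <= K * Rabs (x - c) ^ 4.
Proof.
  intros Hc Hx.
  destruct Hf as [Hcont Hder].
  set (r2 := fun t => f 2%nat t - (f 2%nat c + f 3%nat c * (t - c))).
  set (r1 := fun t => f 1%nat t - (f 1%nat c + f 2%nat c * (t - c) + f 3%nat c / 2 * (t - c) ^ 2)).
  set (r0 := fun t => f 0%nat t - (f 0%nat c + f 1%nat c * (t - c) + f 2%nat c / 2 * (t - c) ^ 2
                                    + f 3%nat c / 6 * (t - c) ^ 3)).
  (* each remainder is the derivative of the previous one and vanishes at c *)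
  assert (S2 : forall t, lo <= t <= hi -> Rabs (r2 t) <= K * Rabs (t - c) ^ 2).
  { intros t Ht. replace (r2 t) with (r2 t - r2 c) by (unfold r2; ring).
    apply (MVT_pow_bound lo hi r2 (fun s => f 3%nat s - f 3%nat c) c t K 1); auto; try lra.
    apply smooth4_bound_ge0.
    apply cont_within_minus. apply Hcont; lia.
    apply cont_within_of_continuous, Rcont_derivable. intros; auto_derive; auto.
    intros s Hs. apply (is_derive_minus (f 2%nat)). apply Hder; [lia| exact Hs]. auto_derive; auto; ring.
    intros s Hs. rewrite pow_1. apply taylor_order1, (between_in c t s); auto. }
  assert (S1 : forall t, lo <= t <= hi -> Rabs (r1 t) <= K * Rabs (t - c) ^ 3).
  { intros t Ht. replace (r1 t) with (r1 t - r1 c) by (unfold r1; ring).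
    apply (MVT_pow_bound lo hi r1 r2 c t K 2); auto; try lra.
    apply smooth4_bound_ge0.
    apply cont_within_minus. apply Hcont; lia.
    apply cont_within_of_continuous, Rcont_derivable. intros; auto_derive; auto.
    intros s Hs. apply (is_derive_minus (f 1%nat)). apply Hder; [lia| exact Hs]. auto_derive; auto; field.
    intros s Hs. apply S2, (between_in c t s); auto. }
  change (Rabs (r0 x) <= K * Rabs (x - c) ^ 4).
  replace (r0 x) with (r0 x - r0 c) by (unfold r0; ring).
  apply (MVT_pow_bound lo hi r0 r1 c x K 3); auto; try lra.
  apply smooth4_bound_ge0.
  apply cont_within_minus. apply Hcont; lia.
  apply cont_within_of_continuous, Rcont_derivable. intros; auto_derive; auto.
  intros s Hs. apply (is_derive_minus (f 0%nat)). apply Hder; [lia| exact Hs]. auto_derive; auto; field.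
  intros s Hs. apply S1, (between_in c x s); auto.
Qed.

End Taylor.

(** * The piecewise quadratic interpolant *)

Definition quad_hat (t : R) : R := Rmax 0 (1 - Rabs t) * (1 - 2 * Rabs t).
Definition quad_bubble (t : R) : R := Rmax 0 (4 * t * (1 - t)).

Lemma inI_affine a h u v w : 0 < h ->
  inI (a + u * h) (a + v * h) (a + w * h)
  = if Rle_dec u w then if Rle_dec w v then true else false else false.
Proof.
  intros Hh. unfold inI.
  destruct (Rle_dec (a + u * h) (a + w * h)) as [H1|H1]; destruct (Rle_dec u w) as [H2|H2].
  - destruct (Rle_dec (a + w * h) (a + v * h)) as [H3|H3]; destruct (Rle_dec w v) as [H4|H4]; auto.
    + exfalso; apply H4. apply (Rmult_le_reg_r h); auto. lra.
    + exfalso; apply H3. apply Rplus_le_compat_l, Rmult_le_compat_r; lra.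
  - exfalso; apply H2. apply (Rmult_le_reg_r h); auto. lra.
  - exfalso; apply H1. apply Rplus_le_compat_l, Rmult_le_compat_r; lra.
  - auto.
Qed.

Lemma inI_true lo hi x : lo <= x <= hi -> inI lo hi x = true.
Proof. intros H. unfold inI. destruct Rle_dec; [destruct Rle_dec|]; auto; lra. Qed.

Lemma phi_int_hat a h M k t : 0 < h -> 0 <= INR k + t <= INR M ->
  phi_int a h M k (a + (INR k + t) * h) = quad_hat t.
Proof.
  intros Hh Ht. unfold phi_int, node. cbv zeta.
  rewrite (inI_true a (a + INR M * h)).
  2:{ split. assert (0 <= (INR k + t) * h) by (apply Rmult_le_pos; lra). lra.
      apply Rplus_le_compat_l, Rmult_le_compat_r; lra. }
  rewrite !inI_affine by auto. rewrite !Bool.andb_true_r.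
  unfold quad_hat, Rmax, Rabs.
  repeat (destruct Rle_dec); repeat (destruct Rcase_abs); try lra;
  try (assert (t = 0) by lra; subst t; field; lra); field_simplify; try lra; try (field; lra).
Qed.

Lemma phi_bub_bubble a h k t : 0 < h -> phi_bub a h k (a + (INR k - 1 + t) * h) = quad_bubble t.
Proof.
  intros Hh. unfold phi_bub, node. cbv zeta.
  rewrite inI_affine by auto. unfold quad_bubble, Rmax.
  repeat destruct Rle_dec; try (field; lra); try nra.
Qed.

Lemma phi_int_hat_x a h M k x : 0 < h -> a <= x <= a + INR M * h ->
  phi_int a h M k x = quad_hat ((x - a) / h - INR k).
Proof.
  intros Hh Hx. replace x with (a + (INR k + ((x - a) / h - INR k)) * h) at 1 by (field; lra).
  apply phi_int_hat; auto.
  replace (INR k + ((x - a) / h - INR k)) with ((x - a) / h) by ring. split.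
  - apply Rmult_le_pos. lra. apply Rlt_le, Rinv_0_lt_compat; auto.
  - apply (Rmult_le_reg_r h); auto. unfold Rdiv. rewrite Rmult_assoc, Rinv_l by lra. lra.
Qed.

Lemma phi_bub_bubble_x a h k x : 0 < h -> phi_bub a h k x = quad_bubble ((x - a) / h - (INR k - 1)).
Proof.
  intros Hh. replace x with (a + (INR k - 1 + ((x - a) / h - (INR k - 1))) * h) at 1 by (field; lra).
  apply phi_bub_bubble; auto.
Qed.

Lemma phi_half_even a h M j x : phi_half a h M (2 * j) x = phi_int a h M j x.
Proof. unfold phi_half. rewrite Nat.even_mul, Nat.div2_double. reflexivity. Qed.

Lemma phi_half_odd a h M j x : phi_half a h M (2 * j + 1) x = phi_bub a h (S j) x.
Proof.
  unfold phi_half. replace (Nat.even (2 * j + 1)) with false.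
  2:{ rewrite Nat.even_add, Nat.even_mul. reflexivity. }
  replace (S (2 * j + 1)) with (2 * (S j))%nat by lia. rewrite Nat.div2_double. reflexivity.
Qed.

Lemma phi_half_cont a h M l : 0 < h -> cont_within a (a + INR M * h) (phi_half a h M l).
Proof.
  intros Hh.
  assert (Haff : forall c, Rcont (fun x => (x - a) / h - c))
    by (intros c; apply Rcont_derivable; intros; auto_derive; auto).
  destruct (Nat.Even_or_Odd l) as [[j ->]|[j ->]].
  - apply (cont_within_ext _ _ (fun x => quad_hat ((x - a) / h - INR j))).
    { intros x Hx. rewrite phi_half_even, phi_int_hat_x; auto. }
    apply cont_within_of_continuous. unfold quad_hat. apply Rcont_mult.
    + apply Rcont_max0, Rcont_minus. apply Rcont_const. apply Rcont_abs, Haff.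
    + apply Rcont_minus. apply Rcont_const. apply Rcont_scal, Rcont_abs, Haff.
  - apply (cont_within_ext _ _ (fun x => quad_bubble ((x - a) / h - (INR (S j) - 1)))).
    { intros x Hx. rewrite phi_half_odd, phi_bub_bubble_x; auto. }
    apply cont_within_of_continuous. unfold quad_bubble. apply Rcont_max0, Rcont_derivable.
    intros; auto_derive; auto.
Qed.

(** The quadratic Lagrange basis of the reference element [[0, 1]] with nodes [0, 1/2, 1]. *)
Definition lagr0 t := (1 - t) * (1 - 2 * t).
Definition lagr1 t := 4 * t * (1 - t).
Definition lagr2 t := t * (2 * t - 1).

Lemma lagr_bounds t : 0 <= t <= 1 ->
  Rabs (lagr0 t) <= 1 /\ Rabs (lagr1 t) <= 1 /\ Rabs (lagr2 t) <= 1.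
Proof.
  intros Ht. pose proof (pow2_ge_0 (2 * t - 1)). unfold lagr0, lagr1, lagr2.
  split; [|split]; unfold Rabs; destruct Rcase_abs; nra.
Qed.

Section Element.
Variables (a h : R) (M k : nat) (t : R).
Hypothesis (Hh : 0 < h) (Hk : (k < M)%nat) (Ht : 0 <= t <= 1).
Let x := a + (INR k + t) * h.

Lemma phi_int_on_elem j : phi_int a h M j x =
  if Nat.eq_dec j k then lagr0 t else if Nat.eq_dec j (S k) then lagr2 t else 0.
Proof.
  unfold x. assert (INR k + 1 <= INR M) by (rewrite <- S_INR; apply le_INR; lia).
  pose proof (pos_INR k).
  replace (a + (INR k + t) * h) with (a + (INR j + (INR k - INR j + t)) * h) by ring.
  rewrite phi_int_hat; auto. 2: lra.
  destruct (Nat.eq_dec j k) as [->|Hjk].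
  { unfold quad_hat, lagr0, Rmax, Rabs. replace (INR k - INR k + t) with t by ring.
    repeat destruct Rle_dec; repeat destruct Rcase_abs; lra || nra. }
  destruct (Nat.eq_dec j (S k)) as [->|Hjk1].
  { rewrite S_INR. unfold quad_hat, lagr2, Rmax, Rabs.
    replace (INR k - (INR k + 1) + t) with (t - 1) by ring.
    repeat destruct Rle_dec; repeat destruct Rcase_abs; try lra; try nra. }
  assert (HH : (j < k)%nat \/ (j > S k)%nat) by lia. destruct HH as [Hl|Hl].
  - assert (INR j + 1 <= INR k) by (rewrite <- S_INR; apply le_INR; lia).
    unfold quad_hat, Rmax, Rabs. repeat destruct Rle_dec; repeat destruct Rcase_abs; try lra; try nra.
  - assert (INR k + 2 <= INR j)
      by (replace 2 with (INR 2) by (simpl; lra); rewrite <- plus_INR; apply le_INR; lia).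
    unfold quad_hat, Rmax, Rabs. repeat destruct Rle_dec; repeat destruct Rcase_abs; try lra; try nra.
Qed.

Lemma phi_bub_on_elem j : phi_bub a h (S j) x = if Nat.eq_dec j k then lagr1 t else 0.
Proof.
  unfold x. replace (a + (INR k + t) * h) with (a + (INR (S j) - 1 + (INR k - INR j + t)) * h)
    by (rewrite S_INR; ring).
  rewrite phi_bub_bubble; auto.
  destruct (Nat.eq_dec j k) as [->|Hjk].
  { unfold quad_bubble, lagr1, Rmax. replace (INR k - INR k + t) with t by ring. destruct Rle_dec; nra. }
  assert (HH : (j < k)%nat \/ (j > k)%nat) by lia. destruct HH as [Hl|Hl].
  - assert (INR j + 1 <= INR k) by (rewrite <- S_INR; apply le_INR; lia).
    unfold quad_bubble, Rmax. destruct Rle_dec; nra.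
  - assert (INR k + 1 <= INR j) by (rewrite <- S_INR; apply le_INR; lia).
    unfold quad_bubble, Rmax. destruct Rle_dec; nra.
Qed.

Lemma phi_half_on_elem l : phi_half a h M l x =
  if Nat.eq_dec l (2 * k) then lagr0 t else if Nat.eq_dec l (2 * k + 1) then lagr1 t
  else if Nat.eq_dec l (2 * k + 2) then lagr2 t else 0.
Proof.
  destruct (Nat.Even_or_Odd l) as [[j ->]|[j ->]].
  - rewrite phi_half_even, phi_int_on_elem.
    repeat destruct Nat.eq_dec; try lia; reflexivity.
  - rewrite phi_half_odd, phi_bub_on_elem.
    repeat destruct Nat.eq_dec; try lia; reflexivity.
Qed.

End Element.

Definition quad_interp (a h : R) (M : nat) (v : nat -> R) (x : R) : R :=
  sum_f_R0 (fun l => phi_half a h M l x * v l) (2 * M).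

Lemma sum_f_R0_dirac (j n : nat) c : (j <= n)%nat ->
  sum_f_R0 (fun l => if Nat.eq_dec l j then c else 0) n = c.
Proof.
  intros Hj. induction n.
  - assert (j = 0)%nat by lia. subst j. reflexivity.
  - rewrite tech5. destruct (Nat.eq_dec (S n) j) as [E|E].
    + subst j. rewrite sum_eq_R0. ring. intros l Hl. destruct (Nat.eq_dec l (S n)); [lia| reflexivity].
    + rewrite IHn by lia. ring.
Qed.

Lemma quad_interp_on_elem a h M k t v : 0 < h -> (k < M)%nat -> 0 <= t <= 1 ->
  quad_interp a h M v (a + (INR k + t) * h) =
  v (2 * k)%nat * lagr0 t + v (2 * k + 1)%nat * lagr1 t + v (2 * k + 2)%nat * lagr2 t.
Proof.
  intros Hh Hk Ht. unfold quad_interp.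
  rewrite (sum_eq _ (fun l => (if Nat.eq_dec l (2 * k) then v (2 * k)%nat * lagr0 t else 0)
                             + (if Nat.eq_dec l (2 * k + 1) then v (2 * k + 1)%nat * lagr1 t else 0)
                             + (if Nat.eq_dec l (2 * k + 2) then v (2 * k + 2)%nat * lagr2 t else 0))).
  - rewrite !plus_sum, !sum_f_R0_dirac by lia. reflexivity.
  - intros l _. rewrite phi_half_on_elem by auto.
    repeat destruct Nat.eq_dec; subst; try lia; ring.
Qed.

Lemma elem_of_point a h M x : 0 < h -> (1 <= M)%nat -> a <= x <= a + INR M * h ->
  exists k t, (k < M)%nat /\ 0 <= t <= 1 /\ x = a + (INR k + t) * h.
Proof.
  intros Hh HM Hx.
  assert (Hs : 0 <= (x - a) / h <= INR M).
  { split. apply Rmult_le_pos. lra. apply Rlt_le, Rinv_0_lt_compat; auto.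
    apply (Rmult_le_reg_r h); auto. unfold Rdiv. rewrite Rmult_assoc, Rinv_l by lra. lra. }
  assert (Hk : exists k, (k < M)%nat /\ INR k <= (x - a) / h <= INR k + 1).
  { clear Hx. induction M as [|M IH]; [lia|].
    destruct (Rle_dec ((x - a) / h) (INR M)) as [H|H].
    - destruct M. { exists 0%nat. simpl in *. split. lia. lra. }
      destruct IH as [k [Hk Hk']]. lia. lra. exists k. split. lia. auto.
    - exists M. split. lia. rewrite S_INR in Hs. lra. }
  destruct Hk as [k [Hk Hk']].
  exists k, ((x - a) / h - INR k). split; auto. split. lra. field. lra.
Qed.

Lemma quad_interp_cont a h M v : 0 < h -> cont_within a (a + INR M * h) (quad_interp a h M v).
Proof.
  intros Hh. unfold quad_interp. apply cont_within_sum. intros l _.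
  apply (cont_within_ext _ _ (fun x => v l * phi_half a h M l x)). intros; ring.
  apply cont_within_scal, phi_half_cont; auto.
Qed.

Lemma quad_interp_bound a h M v Z x : 0 < h -> (1 <= M)%nat -> a <= x <= a + INR M * h ->
  (forall l, (l <= 2 * M)%nat -> Rabs (v l) <= Z) -> Rabs (quad_interp a h M v x) <= 3 * Z.
Proof.
  intros Hh HM Hx HZ. destruct (elem_of_point a h M x Hh HM Hx) as [k [t [Hk [Ht ->]]]].
  rewrite quad_interp_on_elem; auto. destruct (lagr_bounds t Ht) as [B0 [B1 B2]].
  pose proof (HZ (2 * k)%nat ltac:(lia)). pose proof (HZ (2 * k + 1)%nat ltac:(lia)).
  pose proof (HZ (2 * k + 2)%nat ltac:(lia)).
  eapply Rle_trans. apply Rabs_triang. eapply Rle_trans. apply Rplus_le_compat_r, Rabs_triang.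
  rewrite !Rabs_mult.
  pose proof (Rabs_pos (v (2*k)%nat)). pose proof (Rabs_pos (v (2*k+1)%nat)).
  pose proof (Rabs_pos (v (2*k+2)%nat)).
  pose proof (Rabs_pos (lagr0 t)). pose proof (Rabs_pos (lagr1 t)). pose proof (Rabs_pos (lagr2 t)).
  nra.
Qed.

Lemma quad_interp_ext a h M v w x : (forall l, (l <= 2 * M)%nat -> v l = w l) ->
  quad_interp a h M v x = quad_interp a h M w x.
Proof. intros H. unfold quad_interp. apply sum_eq. intros l Hl. rewrite H; auto. Qed.

Lemma quad_interp_minus a h M v w x :
  quad_interp a h M (fun l => v l - w l) x = quad_interp a h M v x - quad_interp a h M w x.
Proof. unfold quad_interp. rewrite <- minus_sum. apply sum_eq. intros; ring. Qed.

Lemma hnode_interior a b M i : a < b -> (1 <= M)%nat -> (1 <= i <= 2 * M - 1)%nat ->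
  a < hnode a ((b - a) / INR M) i < b.
Proof.
  intros Hab HM Hi.
  assert (HMr : 1 <= INR M) by (replace 1 with (INR 1) by reflexivity; apply le_INR; lia).
  assert (1 <= INR i <= 2 * INR M - 1).
  { split. replace 1 with (INR 1) by reflexivity. apply le_INR; lia.
    replace (2 * INR M - 1) with (INR (2 * M - 1)). apply le_INR; lia.
    rewrite minus_INR, mult_INR by lia. simpl; ring. }
  assert (Hh : 0 < (b - a) / INR M) by (apply Rdiv_lt_0_compat; lra).
  assert (Hb : b = a + INR M * ((b - a) / INR M)) by (field; lra).
  unfold hnode, node. set (h := (b - a) / INR M) in *. rewrite Hb. split; nra.
Qed.

Lemma hnode_in a b M l : a < b -> (1 <= M)%nat -> (l <= 2 * M)%nat ->
  a <= hnode a ((b - a) / INR M) l <= b.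
Proof.
  intros Hab HM Hl.
  assert (HMr : 1 <= INR M) by (replace 1 with (INR 1) by reflexivity; apply le_INR; lia).
  apply le_INR in Hl. rewrite mult_INR in Hl. simpl in Hl. pose proof (pos_INR l).
  assert (Hh : 0 < (b - a) / INR M) by (apply Rdiv_lt_0_compat; lra).
  assert (Hb : b = a + INR M * ((b - a) / INR M)) by (field; lra).
  unfold hnode, node. set (h := (b - a) / INR M) in *. rewrite Hb. split; nra.
Qed.

(** * Moments of the nodal polynomial *)

Fixpoint sum_lt (f : nat -> R) (n : nat) : R :=
  match n with O => 0 | S n => sum_lt f n + f n end.

Lemma sum_lt_ext f g n : (forall k, (k < n)%nat -> f k = g k) -> sum_lt f n = sum_lt g n.
Proof. induction n; intros H; simpl; auto. rewrite IHn, H; auto; intros; apply H; lia. Qed.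

Lemma sum_lt_plus f g n : sum_lt (fun k => f k + g k) n = sum_lt f n + sum_lt g n.
Proof. induction n; simpl; [ring| rewrite IHn; ring]. Qed.

Lemma sum_lt_scal c f n : sum_lt (fun k => c * f k) n = c * sum_lt f n.
Proof. induction n; simpl; [ring| rewrite IHn; ring]. Qed.

Lemma sum_lt_abs f n : Rabs (sum_lt f n) <= sum_lt (fun k => Rabs (f k)) n.
Proof. induction n; simpl. rewrite Rabs_R0; lra. eapply Rle_trans. apply Rabs_triang. lra. Qed.

Lemma sum_lt_le f g n : (forall k, (k < n)%nat -> f k <= g k) -> sum_lt f n <= sum_lt g n.
Proof.
  induction n; intros H; simpl. lra.
  apply Rplus_le_compat. apply IHn; intros; apply H; lia. apply H; lia.
Qed.

Lemma sum_lt_split f n m : sum_lt f (n + m) = sum_lt f n + sum_lt (fun j => f (n + j)%nat) m.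
Proof. induction m; simpl. rewrite Nat.add_0_r; ring. rewrite Nat.add_succ_r. simpl. rewrite IHm. ring. Qed.

Lemma sum_lt_shift f n : sum_lt f (S n) = f 0%nat + sum_lt (fun k => f (S k)) n.
Proof. induction n. simpl; ring. simpl sum_lt in *. rewrite IHn. ring. Qed.

Lemma sum_lt_rev f n : sum_lt f n = sum_lt (fun k => f (n - 1 - k)%nat) n.
Proof.
  induction n. reflexivity.
  simpl sum_lt at 1. rewrite IHn, sum_lt_shift.
  replace (S n - 1 - 0)%nat with n by lia.
  rewrite (sum_lt_ext (fun k => f (n - 1 - k)%nat) (fun k => f (S n - 1 - S k)%nat)). ring.
  intros; f_equal; lia.
Qed.

Lemma sum_lt_antisym f n : (forall k, (k < n)%nat -> f (n - 1 - k)%nat = - f k) -> sum_lt f n = 0.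
Proof.
  intros H. assert (sum_lt f n = - sum_lt f n).
  { rewrite sum_lt_rev at 1. replace (- sum_lt f n) with ((-1) * sum_lt f n) by ring.
    rewrite <- sum_lt_scal. apply sum_lt_ext. intros k Hk. rewrite H; auto. ring. }
  lra.
Qed.

Lemma RInt_sum_lt F a h n : Rcont F ->
  RInt F a (a + INR n * h) = sum_lt (fun k => RInt F (a + INR k * h) (a + INR k * h + h)) n.
Proof.
  intros HF. induction n; cbn [sum_lt].
  - simpl. rewrite Rmult_0_l, Rplus_0_r, RInt_point. reflexivity.
  - rewrite <- IHn, S_INR. replace (a + (INR n + 1) * h) with (a + INR n * h + h) by ring.
    symmetry. apply RInt_ChaslesR; apply ex_RInt_Rcont; auto.
Qed.

Lemma sum_far_tele g h eta n : 0 < g -> 0 < h -> h / 2 <= eta ->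
  sum_lt (fun j => h * g * Rpower (eta + INR j * h) (-(g+1))) n <= Rpower 3 (g+1) * Rpower eta (-g).
Proof.
  intros Hg Hh He.
  assert (Tele : forall n, sum_lt (fun j => h * g * Rpower (eta + INR j * h) (-(g+1))) n <=
     Rpower 3 (g+1) * (Rpower eta (-g) - Rpower (eta + INR n * h) (-g))).
  { induction n0; simpl sum_lt.
    - simpl. rewrite Rmult_0_l, Rplus_0_r. lra.
    - pose proof (pos_INR n0).
      pose proof (Rpower_opp_step g (eta + INR n0 * h) h Hg Hh ltac:(nra)) as Step.
      rewrite S_INR. replace (eta + (INR n0 + 1) * h) with (eta + INR n0 * h + h) by ring. lra. }
  eapply Rle_trans. apply Tele. pose proof (Rpower_pos (eta + INR n * h) (-g)).
  pose proof (Rpower_pos 3 (g+1)). nra.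
Qed.

Definition node_poly (al h x : R) : R := (x - al) * (x - al - h / 2) * (x - al - h).

Lemma Rcont_node_poly al h : Rcont (node_poly al h).
Proof. apply Rcont_derivable. intros; unfold node_poly; auto_derive; auto. Qed.

Lemma RInt_node_poly al h : RInt (node_poly al h) al (al + h) = 0.
Proof.
  assert (H : is_RInt (node_poly al h) al (al + h)
     (minus ((fun x => ((x - al) * (x - al - h)) ^ 2 / 4) (al + h))
            ((fun x => ((x - al) * (x - al - h)) ^ 2 / 4) al))).
  { apply (is_RInt_derive (V:=R_CompleteNormedModule)
             (fun x => ((x - al) * (x - al - h)) ^ 2 / 4) (node_poly al h)).
    - intros x _. unfold node_poly. auto_derive; auto. simpl. field.
    - intros x _. apply Rcont_node_poly. }
  apply (is_RInt_unique (V:=R_CompleteNormedModule)) in H. rewrite H.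
  simpl. unfold minus, plus, opp; simpl. field.
Qed.

Lemma node_poly_bound al h x : 0 < h -> al <= x <= al + h -> Rabs (node_poly al h x) <= h ^ 3 / 8.
Proof.
  intros Hh Hx. unfold node_poly.
  replace ((x - al) * (x - al - h / 2) * (x - al - h)) with
    ((x - al - h / 2) * ((x - al - h / 2) ^ 2 - h ^ 2 / 4)) by field.
  rewrite Rabs_mult. replace (h ^ 3 / 8) with ((h / 2) * (h ^ 2 / 4)) by field.
  apply Rmult_le_compat; try apply Rabs_pos.
  - apply Rabs_le; lra.
  - assert (0 <= (h/2 - (x - al - h / 2)) * (h/2 + (x - al - h / 2))) by (apply Rmult_le_pos; lra).
    pose proof (pow2_ge_0 (x - al - h / 2)). apply Rabs_le. split; nra.
Qed.

Section NodeMoment.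
Variables (p g e h : R).
Hypothesis (Hg : 0 < g < 1) (He : 0 < e) (Hh : 0 < h).

Definition node_moment (al : R) := RInt (fun x => node_poly al h x * tweight p g e x) al (al + h).

Lemma Rcont_node_poly_tweight al : Rcont (fun x => node_poly al h x * tweight p g e x).
Proof. apply Rcont_mult. apply Rcont_node_poly. apply Rcont_tweight; auto. Qed.

Lemma node_moment_near al : Rabs (node_moment al) <= h ^ 3 / 8 * RInt (tweight p g e) al (al + h).
Proof.
  unfold node_moment. rewrite <- RInt_scalR by (apply ex_RInt_Rcont, Rcont_tweight; auto).
  apply RInt_abs_le. lra. apply Rcont_node_poly_tweight. apply Rcont_scal, Rcont_tweight; auto.
  intros x Hx. rewrite Rabs_mult, (Rabs_right (tweight _ _ _ _)) by (apply Rle_ge, Rlt_le, tweight_pos).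
  apply Rmult_le_compat_r. apply Rlt_le, tweight_pos. apply node_poly_bound; auto.
Qed.

(** Since [node_poly] has zero mean, only the oscillation of the weight over the element
    contributes, and the weight is Lipschitz away from [p]. *)
Lemma node_moment_far al d : 0 < d -> e <= d -> (forall x, al <= x <= al + h -> d <= Rabs (p - x)) ->
  Rabs (node_moment al) <= h ^ 5 / 16 * g * Rpower d (-(g+1)).
Proof.
  intros Hd Hed Hdist.
  set (c := al + h / 2). set (wc := tweight p g e c).
  assert (E : node_moment al = RInt (fun x => node_poly al h x * (tweight p g e x - wc)) al (al + h)).
  { unfold node_moment.
    replace (RInt (fun x => node_poly al h x * (tweight p g e x - wc)) al (al + h)) with
      (RInt (fun x => node_poly al h x * tweight p g e x) al (al + h)
       - wc * RInt (node_poly al h) al (al + h)).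
    { rewrite RInt_node_poly, Rmult_0_r, Rminus_0_r. reflexivity. }
    rewrite <- RInt_scalR, <- RInt_minusR by
      (apply ex_RInt_Rcont; try apply Rcont_scal;
       first [apply Rcont_node_poly_tweight| apply Rcont_node_poly]).
    apply RInt_extR. intros; ring. }
  rewrite E.
  replace (h ^ 5 / 16 * g * Rpower d (-(g+1))) with
    ((al + h - al) * (h ^ 3 / 8 * (g * Rpower d (-(g+1)) * (h / 2)))) by field.
  apply RInt_abs_le_const. lra.
  { apply Rcont_mult. apply Rcont_node_poly. apply Rcont_minus. apply Rcont_tweight; auto.
    apply Rcont_const. }
  intros x Hx. rewrite Rabs_mult. apply Rmult_le_compat; try apply Rabs_pos.
  apply node_poly_bound; auto.
  assert (d <= Rabs (p - c)) by (apply Hdist; unfold c; lra).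
  pose proof (Hdist x Hx).
  unfold wc. rewrite !tweight_eq by lra.
  eapply Rle_trans. apply (Rpower_opp_lipschitz g d); lra.
  apply Rmult_le_compat_l. apply Rmult_le_pos. lra. apply Rlt_le, Rpower_pos.
  eapply Rle_trans. apply Rabs_triang_inv2.
  replace (p - x - (p - c)) with (c - x) by ring. unfold c. apply Rabs_le. lra.
Qed.

Lemma node_moment_mirror al : node_moment (2 * p - al - h) = - node_moment al.
Proof.
  set (al' := 2 * p - al - h).
  set (f := fun x => node_poly al' h x * tweight p g e x).
  assert (Hc := RInt_comp_lin f (-1) (2 * p) al (al + h)
                  (ex_RInt_Rcont _ _ _ (Rcont_node_poly_tweight al'))).
  replace (-1 * al + 2 * p) with (al' + h) in Hc by (unfold al'; ring).
  replace (-1 * (al + h) + 2 * p) with al' in Hc by (unfold al'; ring).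
  change (RInt f al' (al' + h) = - node_moment al).
  rewrite <- (opp_RInt_swap f) by apply ex_RInt_Rcont, Rcont_node_poly_tweight.
  rewrite <- Hc. unfold node_moment. simpl. unfold opp; simpl. f_equal.
  apply RInt_extR. intros x _. unfold f. change (scal (-1) ?z) with ((-1) * z).
  replace (-1 * x + 2 * p) with (2 * p - x) by ring. rewrite tweight_mirror.
  unfold node_poly, al'. field.
Qed.

(** The factor [d] compensates the [d^(-(g+1))] of [node_moment_far], and the weight
    on the element is at least [(3d)^(-g)]. *)
Lemma node_moment_far_weighted al d : h / 2 <= d -> e <= d ->
  (forall x, al <= x <= al + h -> d <= Rabs (p - x) <= 3 * d) ->
  d * Rabs (node_moment al) <= 3 / 16 * h ^ 4 * RInt (tweight p g e) al (al + h).
Proof.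
  intros Hd Hed Hdist.
  pose proof (node_moment_far al d ltac:(lra) Hed (fun x Hx => proj1 (Hdist x Hx))) as TB.
  assert (Low : h * Rpower (3 * d) (-g) <= RInt (tweight p g e) al (al + h)).
  { apply tweight_int_ge; try lra. intros x Hx. apply Hdist; auto. }
  rewrite <- Rpower_mult_distr in Low by lra.
  assert (Dg : d * Rpower d (-(g+1)) = Rpower d (-g)).
  { rewrite <- (Rpower_1 d) at 1 by lra. rewrite <- Rpower_plus. f_equal; ring. }
  assert (R3 : g * Rpower 3 g <= 3).
  { assert (Rpower 3 g <= 3) by (rewrite <- (Rpower_1 3) at 2 by lra; apply Rle_Rpower; lra).
    pose proof (Rpower_pos 3 g). nra. }
  pose proof (Rpower_pos 3 (-g)). pose proof (Rpower_pos d (-g)).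
  assert (0 <= h ^ 4) by (apply pow_le; lra).
  apply Rle_trans with (d * (h ^ 5 / 16 * g * Rpower d (-(g+1)))).
  { apply Rmult_le_compat_l; lra. }
  replace (d * (h ^ 5 / 16 * g * Rpower d (-(g+1)))) with
    (h ^ 4 / 16 * (g * Rpower 3 g) * (h * (Rpower 3 (-g) * Rpower d (-g)))).
  2:{ rewrite <- Dg, (Rpower_Ropp 3 g). field. apply Rgt_not_eq, Rpower_pos. }
  assert (0 <= h * (Rpower 3 (-g) * Rpower d (-g))) by (apply Rmult_le_pos; [lra| apply Rmult_le_pos; lra]).
  apply Rle_trans with (h ^ 4 / 16 * 3 * (h * (Rpower 3 (-g) * Rpower d (-g)))).
  { apply Rmult_le_compat_r; auto. apply Rmult_le_compat_l; lra. }
  replace (3 / 16 * h ^ 4 * RInt (tweight p g e) al (al + h))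
    with (h ^ 4 / 16 * 3 * RInt (tweight p g e) al (al + h)) by field.
  apply Rmult_le_compat_l; lra.
Qed.

Lemma node_moment_dist_bound al : e <= h / 2 ->
  Rabs (al + h / 2 - p) * Rabs (node_moment al) <= h ^ 4 / 2 * RInt (tweight p g e) al (al + h).
Proof.
  intros Heh. set (c := al + h / 2).
  assert (IW : 0 <= RInt (tweight p g e) al (al + h)).
  { apply RInt_ge0. lra. apply Rcont_tweight; auto. intros; apply Rlt_le, tweight_pos. }
  pose proof (pow_le h 4 ltac:(lra)). pose proof (Rabs_pos (node_moment al)).
  destruct (Rlt_dec (Rabs (c - p)) h) as [Hn|Hn].
  - pose proof (node_moment_near al) as Hnear.
    apply Rle_trans with (h * (h ^ 3 / 8 * RInt (tweight p g e) al (al + h))).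
    { apply Rmult_le_compat; try apply Rabs_pos; lra. }
    replace (h * (h ^ 3 / 8 * RInt (tweight p g e) al (al + h)))
      with (h ^ 4 / 8 * RInt (tweight p g e) al (al + h)) by field.
    apply Rmult_le_compat_r; auto. lra.
  - set (d := Rabs (c - p) - h / 2).
    assert (Dist : forall x, al <= x <= al + h -> d <= Rabs (p - x) <= 3 * d).
    { intros x Hx. assert (Rabs (c - x) <= h / 2) by (apply Rabs_le; unfold c; lra).
      pose proof (Rabs_triang (p - x) (x - c)). pose proof (Rabs_triang (p - c) (c - x)).
      replace (p - x + (x - c)) with (-(c - p)) in H2 by ring.
      replace (p - c + (c - x)) with (p - x) in H3 by ring.
      rewrite Rabs_Ropp, (Rabs_minus_sym x c) in H2. rewrite (Rabs_minus_sym p c) in H3.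
      unfold d. lra. }
    pose proof (node_moment_far_weighted al d ltac:(unfold d; lra) ltac:(unfold d; lra) Dist).
    assert (Rabs (c - p) <= 2 * d) by (unfold d; lra).
    apply Rle_trans with (2 * (d * Rabs (node_moment al))).
    { rewrite <- Rmult_assoc. apply Rmult_le_compat_r; lra. }
    nra.
Qed.

End NodeMoment.

(** * The one-dimensional estimate *)

Section Interp1D.
Variables (a b g : R) (f : nat -> R -> R) (K3 K4 : R).
Hypothesis (Hab : a < b) (Hg : 0 < g < 1) (Hf : smooth4_on a b f)
           (HK3 : forall t, a <= t <= b -> Rabs (f 3%nat t) <= K3)
           (HK4 : forall t, a <= t <= b -> Rabs (f 4%nat t) <= K4).

Let K4_ge0 : 0 <= K4 := smooth4_bound_ge0 a b f K4 Hab HK4.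

(** The cubic Taylor polynomial at the midpoint is interpolated with error exactly
    [f3/6 * node_poly]; the Taylor remainder, of size [K4 (h/2)^4] at the four points involved,
    gives the rest. *)
Lemma local_interp_taylor al h x : 0 < h -> a <= al -> al + h <= b -> al <= x <= al + h ->
  let t := (x - al) / h in
  Rabs (f 0%nat x - (f 0%nat al * lagr0 t + f 0%nat (al + h / 2) * lagr1 t + f 0%nat (al + h) * lagr2 t)
        - f 3%nat (al + h / 2) / 6 * node_poly al h x) <= K4 * h ^ 4 / 4.
Proof.
  intros Hh Ha Hb Hx t.
  set (c := al + h / 2).
  set (P := fun y => f 0%nat c + f 1%nat c * (y - c) + f 2%nat c / 2 * (y - c) ^ 2
                     + f 3%nat c / 6 * (y - c) ^ 3).
  set (Rm := fun y => f 0%nat y - P y).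
  assert (Hxt : x = al + t * h) by (unfold t; field; lra).
  assert (Ht : 0 <= t <= 1).
  { unfold t; split. apply Rmult_le_pos. lra. apply Rlt_le, Rinv_0_lt_compat; auto.
    apply (Rmult_le_reg_r h); auto. unfold Rdiv. rewrite Rmult_assoc, Rinv_l by lra. lra. }
  assert (Id : P x - (P al * lagr0 t + P c * lagr1 t + P (al + h) * lagr2 t)
               = f 3%nat c / 6 * node_poly al h x).
  { rewrite Hxt. unfold P, c, lagr0, lagr1, lagr2, node_poly. field. }
  assert (RB : forall y, al <= y <= al + h -> Rabs (Rm y) <= K4 * (h / 2) ^ 4).
  { intros y Hy. unfold Rm, P.
    eapply Rle_trans. apply (taylor_order4 a b f K4 Hab Hf HK4 c y); unfold c; lra.
    apply Rmult_le_compat_l; auto. apply pow_incr. split. apply Rabs_pos.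
    apply Rabs_le. unfold c; lra. }
  replace (f 0%nat x - (f 0%nat al * lagr0 t + f 0%nat c * lagr1 t + f 0%nat (al + h) * lagr2 t)
           - f 3%nat c / 6 * node_poly al h x)
    with (Rm x - (Rm al * lagr0 t + Rm c * lagr1 t + Rm (al + h) * lagr2 t))
    by (unfold Rm; rewrite <- Id; ring).
  destruct (lagr_bounds t Ht) as [L0b [L1b L2b]].
  pose proof (RB x Hx). pose proof (RB al ltac:(lra)). pose proof (RB c ltac:(unfold c; lra)).
  pose proof (RB (al + h) ltac:(lra)).
  assert (Hq : 0 <= K4 * (h / 2) ^ 4) by (apply Rmult_le_pos; [auto| apply pow_le; lra]).
  assert (Prod : forall r l, Rabs r <= K4 * (h / 2) ^ 4 -> Rabs l <= 1 ->
                   Rabs (r * l) <= K4 * (h / 2) ^ 4).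
  { intros r l Hr Hl. rewrite Rabs_mult. pose proof (Rabs_pos r). pose proof (Rabs_pos l). nra. }
  pose proof (Prod _ _ H0 L0b). pose proof (Prod _ _ H1 L1b). pose proof (Prod _ _ H2 L2b).
  eapply Rle_trans. apply Rabs_triang. rewrite Rabs_Ropp.
  eapply Rle_trans. apply Rplus_le_compat_l, Rabs_triang.
  eapply Rle_trans. apply Rplus_le_compat_l, Rplus_le_compat_r, Rabs_triang.
  replace (K4 * h ^ 4 / 4) with (4 * (K4 * (h / 2) ^ 4)) by field. lra.
Qed.

Variables (M : nat) (h p e : R).
Hypothesis (HM : (1 <= M)%nat) (Hh : 0 < h) (HbM : b = a + INR M * h) (Hp : a <= p <= b)
           (He : 0 < e <= h / 2).

Definition interp_err (x : R) := f 0%nat x - quad_interp a h M (fun l => f 0%nat (hnode a h l)) x.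

Lemma interp_err_cont : cont_within a b interp_err.
Proof.
  unfold interp_err. apply cont_within_minus. apply (proj1 Hf); lia.
  rewrite HbM. apply quad_interp_cont; auto.
Qed.

Lemma interp_err_on_elem k x : (k < M)%nat -> a + INR k * h <= x <= a + INR k * h + h ->
  let t := (x - (a + INR k * h)) / h in
  interp_err x = f 0%nat x - (f 0%nat (a + INR k * h) * lagr0 t + f 0%nat (a + INR k * h + h / 2) * lagr1 t
                              + f 0%nat (a + INR k * h + h) * lagr2 t).
Proof.
  intros Hk Hx t. unfold interp_err. f_equal.
  assert (Hxt : x = a + (INR k + t) * h) by (unfold t; field; lra).
  assert (Ht : 0 <= t <= 1).
  { unfold t; split. apply Rmult_le_pos. lra. apply Rlt_le, Rinv_0_lt_compat; auto.
    apply (Rmult_le_reg_r h); auto. unfold Rdiv. rewrite Rmult_assoc, Rinv_l by lra. lra. }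
  rewrite Hxt at 1. rewrite quad_interp_on_elem by auto. unfold hnode, node.
  replace (a + INR (2 * k) / 2 * h) with (a + INR k * h) by (rewrite mult_INR; simpl; field).
  replace (a + INR (2 * k + 1) / 2 * h) with (a + INR k * h + h / 2)
    by (rewrite plus_INR, mult_INR; simpl; field).
  replace (a + INR (2 * k + 2) / 2 * h) with (a + INR k * h + h)
    by (rewrite plus_INR, mult_INR; simpl; field).
  reflexivity.
Qed.

Let elem_int (F : R -> R) (k : nat) : R := RInt F (a + INR k * h) (a + INR k * h + h).
Let moment (k : nat) : R := node_moment p g e h (a + INR k * h).

Lemma RInt_elems F : Rcont F -> RInt F a b = sum_lt (elem_int F) M.
Proof. intros HF. rewrite HbM. apply RInt_sum_lt; auto. Qed.

Lemma shifted_moment_bound al : a <= al -> al + h <= b ->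
  Rabs ((f 3%nat (al + h / 2) - f 3%nat p) / 6 * node_moment p g e h al)
    <= K4 * h ^ 4 / 12 * RInt (tweight p g e) al (al + h).
Proof.
  intros Hal Hbl. set (c := al + h / 2).
  pose proof (taylor_order1 a b f K4 Hab Hf HK4 c p ltac:(unfold c; lra) Hp) as Lip.
  pose proof (node_moment_dist_bound p g e h Hg (proj1 He) Hh al (proj2 He)) as DB. fold c in DB.
  rewrite Rabs_minus_sym in Lip. rewrite (Rabs_minus_sym c p) in DB.
  pose proof (Rabs_pos (node_moment p g e h al)).
  unfold Rdiv. rewrite !Rabs_mult, (Rabs_right (/ 6)) by lra.
  apply Rle_trans with (K4 / 6 * (Rabs (p - c) * Rabs (node_moment p g e h al))).
  { replace (K4 / 6 * (Rabs (p - c) * Rabs (node_moment p g e h al)))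
      with (K4 * Rabs (p - c) * / 6 * Rabs (node_moment p g e h al)) by (unfold Rdiv; ring).
    apply Rmult_le_compat_r; auto. apply Rmult_le_compat_r; lra. }
  apply Rle_trans with (K4 / 6 * (h ^ 4 / 2 * RInt (tweight p g e) al (al + h))).
  { apply Rmult_le_compat_l; lra. }
  right. field.
Qed.

(** The midpoint value [f3 c] of [local_interp_taylor] is traded for [f3 p]; the
    difference is controlled by [shifted_moment_bound]. *)
Lemma elem_err_moment k : (k < M)%nat ->
  Rabs (elem_int (fun x => interp_err (clamp a b x) * tweight p g e x) k - f 3%nat p / 6 * moment k)
    <= K4 * h ^ 4 * elem_int (tweight p g e) k.
Proof.
  intros Hk. unfold elem_int, moment. set (al := a + INR k * h). set (c := al + h / 2).
  assert (Hal : a <= al) by (unfold al; pose proof (pos_INR k); nra).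
  assert (Hbl : al + h <= b).
  { unfold al. rewrite HbM. assert (INR k + 1 <= INR M) by (rewrite <- S_INR; apply le_INR; lia). nra. }
  assert (Cw : Rcont (tweight p g e)) by (apply Rcont_tweight; lra).
  assert (Ce : Rcont (fun x => interp_err (clamp a b x)))
    by (apply Rcont_clamp_comp; [lra| apply interp_err_cont]).
  assert (Cm : Rcont (fun x => node_poly al h x * tweight p g e x))
    by (apply Rcont_node_poly_tweight; auto; lra).
  set (G := fun x => (interp_err (clamp a b x) - f 3%nat c / 6 * node_poly al h x) * tweight p g e x).
  assert (CG : Rcont G).
  { apply Rcont_mult; auto. apply Rcont_minus; auto. apply Rcont_scal, Rcont_node_poly. }
  replace (RInt (fun x => interp_err (clamp a b x) * tweight p g e x) al (al + h)
           - f 3%nat p / 6 * node_moment p g e h al)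
    with (RInt G al (al + h) + (f 3%nat c - f 3%nat p) / 6 * node_moment p g e h al).
  2:{ unfold node_moment. rewrite <- !RInt_scalR by (apply ex_RInt_Rcont; auto).
      rewrite <- RInt_minusR, <- RInt_plusR by
        (apply ex_RInt_Rcont; first [assumption| apply Rcont_scal; auto| apply Rcont_mult; auto]).
      apply RInt_extR. intros x _. unfold G. field. }
  assert (P1 : Rabs (RInt G al (al + h)) <= K4 * h ^ 4 / 4 * RInt (tweight p g e) al (al + h)).
  { rewrite <- RInt_scalR by (apply ex_RInt_Rcont; auto).
    apply RInt_abs_le; auto. lra. apply Rcont_scal; auto.
    intros x Hx. unfold G.
    rewrite Rabs_mult, (Rabs_right (tweight _ _ _ _)) by (apply Rle_ge, Rlt_le, tweight_pos).
    apply Rmult_le_compat_r. apply Rlt_le, tweight_pos.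
    rewrite clamp_id by lra. rewrite (interp_err_on_elem k) by (auto; unfold al in Hx; lra).
    apply local_interp_taylor; auto; lra. }
  pose proof (shifted_moment_bound al Hal Hbl) as P2. fold c in P2.
  assert (0 <= K4 * h ^ 4 * RInt (tweight p g e) al (al + h)).
  { apply Rmult_le_pos. apply Rmult_le_pos; [exact K4_ge0| apply pow_le; lra].
    apply RInt_ge0; [lra| auto| intros; apply Rlt_le, tweight_pos]. }
  eapply Rle_trans. apply Rabs_triang. lra.
Qed.

Lemma far_moments_bound n (al : nat -> R) eta : h / 2 <= eta ->
  (forall j, (j < n)%nat -> forall x, al j <= x <= al j + h -> eta + INR j * h <= Rabs (p - x)) ->
  Rabs (sum_lt (fun j => node_moment p g e h (al j)) n)
    <= h ^ 4 / 16 * (Rpower 3 (g + 1) * Rpower eta (-g)).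
Proof.
  intros Heta Hd. eapply Rle_trans. apply sum_lt_abs.
  apply Rle_trans with (sum_lt (fun j => h ^ 4 / 16 * (h * g * Rpower (eta + INR j * h) (-(g+1)))) n).
  { apply sum_lt_le. intros j Hj. pose proof (pos_INR j).
    eapply Rle_trans. apply (node_moment_far p g e h Hg ltac:(lra) Hh (al j) (eta + INR j * h)).
    nra. nra. apply Hd; auto. right; field. }
  rewrite sum_lt_scal. apply Rmult_le_compat_l. apply Rmult_le_pos. apply pow_le; lra. lra.
  apply sum_far_tele; lra.
Qed.

(** The moments of the elements on either side of [p] cancel in mirror pairs; what is
    left are the elements on the longer side, all at distance [>= eta] from [p]. *)
Lemma moments_sum_bound i : (1 <= i <= 2 * M - 1)%nat -> p = a + INR i / 2 * h ->
  Rabs (sum_lt moment M) <= h ^ 4 / 16 * (Rpower 3 (g + 1) * Rpower (Rmin (p - a) (b - p)) (-g)).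
Proof.
  intros Hi Hpi. unfold moment.
  assert (HiR : 1 <= INR i <= 2 * INR M - 1).
  { split. replace 1 with (INR 1) by reflexivity. apply le_INR; lia.
    replace (2 * INR M - 1) with (INR (2 * M - 1)). apply le_INR; lia.
    rewrite minus_INR, mult_INR by lia. simpl; ring. }
  destruct (Compare_dec.le_dec i M) as [HiM|HiM].
  - assert (Heta : Rmin (p - a) (b - p) = INR i / 2 * h).
    { rewrite Rmin_left. rewrite Hpi; ring. rewrite Hpi, HbM. apply le_INR in HiM. nra. }
    rewrite Heta. replace M with (i + (M - i))%nat at 1 by lia. rewrite sum_lt_split.
    rewrite (sum_lt_antisym (fun k => node_moment p g e h (a + INR k * h)) i).
    2:{ intros k Hk. rewrite <- (node_moment_mirror p g e h (proj1 He)). f_equal.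
        rewrite !minus_INR by lia. rewrite Hpi. simpl. field. }
    rewrite Rplus_0_l. apply (far_moments_bound (M - i) (fun j => a + INR (i + j) * h)). nra.
    intros j Hj x Hx. rewrite plus_INR in Hx. rewrite Rabs_left1; rewrite Hpi.
    nra. pose proof (pos_INR j). nra.
  - assert (Heta : Rmin (p - a) (b - p) = (INR M - INR i / 2) * h).
    { rewrite Rmin_right. rewrite Hpi, HbM; ring. rewrite Hpi, HbM.
      assert (INR M <= INR i) by (apply le_INR; lia). nra. }
    rewrite Heta.
    assert (HMi : INR M + 1 <= INR i) by (rewrite <- S_INR; apply le_INR; lia).
    replace M with ((i - M) + (2 * M - i))%nat at 1 by lia. rewrite sum_lt_split.
    rewrite (sum_lt_antisym (fun k => node_moment p g e h (a + INR (i - M + k) * h)) (2 * M - i)).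
    2:{ intros k Hk. rewrite <- (node_moment_mirror p g e h (proj1 He)). f_equal.
        repeat first [rewrite plus_INR | rewrite minus_INR by lia | rewrite mult_INR].
        rewrite Hpi. simpl. field. }
    rewrite Rplus_0_r, sum_lt_rev.
    apply (far_moments_bound (i - M) (fun j => a + INR (i - M - 1 - j) * h)). pose proof (pos_INR M). nra.
    intros j Hj x Hx. rewrite !minus_INR in Hx by lia. change (INR 1) with 1 in Hx.
    pose proof (pos_INR j). assert (0 <= INR j * h) by (apply Rmult_le_pos; lra).
    assert (0 <= (INR M - INR i / 2) * h) by (apply Rmult_le_pos; lra).
    rewrite Rabs_right; rewrite Hpi; lra.
Qed.

(** Up to [K4 h^4] times the weight mass, the truncated integral is [f3(p)/6] times the sum
    of the [node_poly] moments. *)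
Lemma trunc_int_interp_err_bound i : (1 <= i <= 2 * M - 1)%nat -> p = a + INR i / 2 * h ->
  Rabs (trunc_int a b p g interp_err e)
    <= K3 / 6 * (h ^ 4 / 16 * (Rpower 3 (g + 1) * Rpower (Rmin (p - a) (b - p)) (-g)))
       + K4 * h ^ 4 * RInt (tweight p g e) a b.
Proof.
  intros Hi Hpi.
  assert (Cw : Rcont (tweight p g e)) by (apply Rcont_tweight; lra).
  assert (Cf : Rcont (fun x => interp_err (clamp a b x) * tweight p g e x)).
  { apply Rcont_mult; auto. apply Rcont_clamp_comp. lra. apply interp_err_cont. }
  unfold trunc_int. rewrite !RInt_elems by auto.
  set (A := elem_int (fun x => interp_err (clamp a b x) * tweight p g e x)).
  replace (sum_lt A M)
    with (f 3%nat p / 6 * sum_lt moment M + sum_lt (fun k => A k - f 3%nat p / 6 * moment k) M).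
  2:{ rewrite <- sum_lt_scal, <- sum_lt_plus. apply sum_lt_ext. intros; ring. }
  eapply Rle_trans. apply Rabs_triang. apply Rplus_le_compat.
  - rewrite Rabs_mult. unfold Rdiv at 1. rewrite Rabs_mult, (Rabs_right (/6)) by lra.
    apply Rmult_le_compat. apply Rmult_le_pos. apply Rabs_pos. lra. apply Rabs_pos.
    apply Rmult_le_compat_r. lra. apply HK3; lra.
    apply (moments_sum_bound i); auto.
  - eapply Rle_trans. apply sum_lt_abs. rewrite <- sum_lt_scal. apply sum_lt_le. intros k Hk.
    apply elem_err_moment; auto.
Qed.

End Interp1D.

Definition interp_err_const (a b g : R) : R :=
  Rpower 3 (g + 1) / 96 + tweight_mass a b g * Rpower (b - a) g.

Lemma pv_interp_err_bound a b g f K3 K4 (M i : nat) :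
  a < b -> 0 < g < 1 -> smooth4_on a b f ->
  (forall t, a <= t <= b -> Rabs (f 3%nat t) <= K3) ->
  (forall t, a <= t <= b -> Rabs (f 4%nat t) <= K4) ->
  (1 <= M)%nat -> (1 <= i <= 2 * M - 1)%nat ->
  let h := (b - a) / INR M in
  let p := hnode a h i in
  Rabs (pv a b p g (fun x => f 0%nat x - quad_interp a h M (fun l => f 0%nat (hnode a h l)) x))
    <= (K3 + K4) * interp_err_const a b g * (h ^ 4 * Rpower (Rmin (p - a) (b - p)) (-g)).
Proof.
  intros Hab Hg Hf HK3 HK4 HM Hi h p.
  assert (Hh : 0 < h) by (apply Rdiv_lt_0_compat; [lra| apply lt_0_INR; lia]).
  assert (HbM : b = a + INR M * h) by (unfold h; field; apply not_0_INR; lia).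
  assert (Hp : a < p < b) by (apply hnode_interior; auto).
  assert (K3p : 0 <= K3) by (eapply Rle_trans; [apply Rabs_pos| apply (HK3 a); lra]).
  pose proof (smooth4_bound_ge0 a b f K4 Hab HK4) as K4p.
  set (eta := Rmin (p - a) (b - p)).
  assert (Heta : 0 < eta <= b - a) by (unfold eta, Rmin; destruct Rle_dec; lra).
  set (X := h ^ 4 * Rpower eta (-g)).
  assert (HX : 0 <= X) by (apply Rmult_le_pos; [apply pow_le; lra| apply Rlt_le, Rpower_pos]).
  pose proof (tweight_mass_ge0 a b g Hg) as W0. set (W := tweight_mass a b g) in *.
  apply (pv_bound_of_trunc a b p g (proj1 Hp) (proj2 Hp) Hg _ _ (h / 2)). lra.
  { apply (interp_err_cont a b f Hf M h); auto. }
  intros e He.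
  eapply Rle_trans. apply (trunc_int_interp_err_bound a b g f K3 K4 Hab Hg Hf HK3 HK4 M h p e
                             HM Hh HbM ltac:(lra) ltac:(lra) i Hi eq_refl).
  fold eta.
  (* eta <= b - a turns the weight mass into a multiple of eta^(-g) *)
  assert (Mass : RInt (tweight p g e) a b <= W * Rpower (b - a) g * Rpower eta (-g)).
  { assert (1 <= Rpower (b - a) g * Rpower eta (-g)).
    { replace 1 with (Rpower (b - a) g * Rpower (b - a) (-g)).
      - apply Rmult_le_compat_l. apply Rlt_le, Rpower_pos. apply Rpower_opp_le_base; lra.
      - rewrite <- Rpower_plus. replace (g + - g) with 0 by ring. apply Rpower_O. lra. }
    apply Rle_trans with W. apply tweight_int_le_mass; auto; try lra.
    assert (h <= b - a).
    { rewrite HbM. assert (1 <= INR M) by (change 1 with (INR 1); apply le_INR; lia). nra. }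
    lra.
    rewrite Rmult_assoc. rewrite <- (Rmult_1_r W) at 1. apply Rmult_le_compat_l; auto. }
  replace (K3 / 6 * (h ^ 4 / 16 * (Rpower 3 (g + 1) * Rpower eta (-g))))
    with (K3 * (Rpower 3 (g + 1) / 96) * X) by (unfold X; field).
  assert (K4 * h ^ 4 * RInt (tweight p g e) a b <= K4 * (W * Rpower (b - a) g) * X).
  { unfold X. replace (K4 * (W * Rpower (b - a) g) * (h ^ 4 * Rpower eta (-g)))
      with (K4 * h ^ 4 * (W * Rpower (b - a) g * Rpower eta (-g))) by ring.
    apply Rmult_le_compat_l; auto. apply Rmult_le_pos; auto. apply pow_le; lra. }
  unfold interp_err_const. fold W.
  pose proof (Rpower_pos 3 (g + 1)). pose proof (Rpower_pos (b - a) g).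
  assert (0 <= K3 * (W * Rpower (b - a) g) * X)
    by (apply Rmult_le_pos; auto; apply Rmult_le_pos; auto; apply Rmult_le_pos; lra).
  assert (0 <= K4 * (Rpower 3 (g + 1) / 96) * X)
    by (apply Rmult_le_pos; auto; apply Rmult_le_pos; lra).
  lra.
Qed.

Lemma cont_on_rect_unif F a b c d : cont_on_rect F a b c d ->
  forall eps, 0 < eps -> exists delta, 0 < delta /\
    forall x y x' y', in_rect a b c d x y -> in_rect a b c d x' y' ->
      Rabs (x - x') < delta -> Rabs (y - y') < delta -> Rabs (F x y - F x' y') < eps.
Proof.
  intros HF eps Heps.
  assert (Hc : forall uv : R * R, exists dl, 0 < dl /\ (in_rect a b c d (fst uv) (snd uv) ->
       forall x' y', in_rect a b c d x' y' -> Rabs (x' - fst uv) < dl -> Rabs (y' - snd uv) < dl ->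
       Rabs (F x' y' - F (fst uv) (snd uv)) < eps / 2)).
  { intros [u v]. simpl. destruct (classic (in_rect a b c d u v)) as [Hin|Hout].
    - destruct (HF u v Hin (eps / 2)) as [dl [Hdl H]]. lra. exists dl. split; auto.
    - exists 1. split. lra. intros; contradiction. }
  destruct (choice _ Hc) as [dl Pdl].
  assert (Pos : forall u v, 0 < dl (u, v) / 2) by (intros u v; destruct (Pdl (u, v)); lra).
  destruct (compactness_value_2d a b c d (fun u v => mkposreal _ (Pos u v))) as [d0 Hd0].
  exists d0. split. apply cond_pos.
  intros x y x' y' Hxy Hxy' Hx Hy.
  apply NNPP. intros Hn. apply (Hd0 x y (proj1 Hxy) (proj2 Hxy)).
  intros [u [v [Hu [Hv [Hxu [Hyv Hdd]]]]]]. simpl in *. apply Hn.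
  destruct (Pdl (u, v)) as [Hp H]. simpl in H. assert (Hin : in_rect a b c d u v) by (split; auto).
  assert (A1 : Rabs (F x y - F u v) < eps / 2) by (apply H; auto; lra).
  assert (A2 : Rabs (F x' y' - F u v) < eps / 2).
  { apply H; auto.
    - replace (x' - u) with ((x' - x) + (x - u)) by ring. eapply Rle_lt_trans. apply Rabs_triang.
      rewrite Rabs_minus_sym in Hx. lra.
    - replace (y' - v) with ((y' - y) + (y - v)) by ring. eapply Rle_lt_trans. apply Rabs_triang.
      rewrite Rabs_minus_sym in Hy. lra. }
  replace (F x y - F x' y') with ((F x y - F u v) - (F x' y' - F u v)) by ring.
  eapply Rle_lt_trans. apply Rabs_triang. rewrite Rabs_Ropp. lra.
Qed.

(** A function whose oscillation on [delta]-close points is at most 1 grows by at most 1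
    per step of length [delta / 2]. *)
Lemma bounded_of_small_oscillation lo hi delta : lo <= hi -> 0 < delta -> exists N, 0 <= N /\
  forall f : R -> R,
    (forall s t, lo <= s <= hi -> lo <= t <= hi -> Rabs (s - t) < delta -> Rabs (f s - f t) <= 1) ->
  forall x, lo <= x <= hi -> Rabs (f x) <= Rabs (f lo) + N.
Proof.
  intros Hlh Hd. destruct (INR_archimed (delta / 2) (hi - lo)) as [n Hn]. lra.
  exists (INR n). split. apply pos_INR.
  intros f Hf.
  assert (Ind : forall m x, lo <= x <= hi -> x <= lo + INR m * (delta / 2) ->
                  Rabs (f x) <= Rabs (f lo) + INR m).
  { induction m; intros x Hx Hxm.
    - simpl in *. assert (x = lo) by lra. subst. lra.
    - rewrite S_INR in *. destruct (Rle_dec x (lo + INR m * (delta / 2))) as [Hl|Hl].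
      + specialize (IHm x Hx Hl). lra.
      + set (x' := lo + INR m * (delta / 2)).
        assert (Hx' : lo <= x' <= hi) by (unfold x'; pose proof (pos_INR m); nra).
        specialize (IHm x' Hx' ltac:(unfold x'; lra)).
        assert (Rabs (f x - f x') <= 1) by (apply Hf; auto; apply Rabs_def1; unfold x' in *; lra).
        pose proof (Rabs_triang_inv (f x) (f x')). lra. }
  intros x Hx. apply Ind; auto. nra.
Qed.

Lemma cont_on_rect_bounded F a b c d : a <= b -> c <= d -> cont_on_rect F a b c d ->
  exists K, 0 <= K /\ forall x y, in_rect a b c d x y -> Rabs (F x y) <= K.
Proof.
  intros Hab Hcd HF. destruct (cont_on_rect_unif F a b c d HF 1) as [dl [Hdl H]]. lra.
  destruct (bounded_of_small_oscillation a b dl Hab Hdl) as [N1 [HN1 C1]].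
  destruct (bounded_of_small_oscillation c d dl Hcd Hdl) as [N2 [HN2 C2]].
  exists (Rabs (F a c) + N1 + N2). split. pose proof (Rabs_pos (F a c)). lra.
  intros x y [Hx Hy].
  assert (X1 : Rabs (F x c) <= Rabs (F a c) + N1).
  { apply (C1 (fun x => F x c)); auto. intros s t Hs Ht Hst. apply Rlt_le, H; try (split; lra); auto.
    rewrite Rminus_eq_0, Rabs_R0; auto. }
  assert (X2 : Rabs (F x y) <= Rabs (F x c) + N2).
  { apply (C2 (fun y => F x y)); auto. intros s t Hs Ht Hst. apply Rlt_le, H; try (split; lra); auto.
    rewrite Rminus_eq_0, Rabs_R0; auto. }
  lra.
Qed.

Lemma cont_on_rect_swap F a b c d : cont_on_rect F a b c d -> cont_on_rect (fun y x => F x y) c d a b.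
Proof.
  intros HF y x [Hy Hx] eps He. destruct (HF x y (conj Hx Hy) eps He) as [dl [Hdl H]].
  exists dl; split; auto. intros y' x' [Hy' Hx'] H1 H2. apply H; auto. split; auto.
Qed.

Lemma cont_on_rect_slice F a b c d y : cont_on_rect F a b c d -> c <= y <= d ->
  cont_within a b (fun x => F x y).
Proof.
  intros HF Hy x Hx eps He. destruct (HF x y (conj Hx Hy) eps He) as [dl [Hdl H]].
  exists dl; split; auto. intros x' Hx' Hxx. apply H; auto. split; auto.
  rewrite Rminus_eq_0, Rabs_R0; auto.
Qed.

Lemma is_derive_of_has_deriv_in f lo hi x l : lo < x < hi -> has_deriv_in f lo hi x l -> is_derive f x l.
Proof.
  intros Hx H. apply is_derive_Reals. intros eps He.
  destruct (H eps He) as [dl [Hdl K]].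
  assert (Hpos : 0 < Rmin dl (Rmin (x - lo) (hi - x))) by (apply Rmin_pos; auto; apply Rmin_pos; lra).
  exists (mkposreal _ Hpos). intros h Hh Hh'. simpl in Hh'.
  pose proof (Rmin_l dl (Rmin (x - lo) (hi - x))). pose proof (Rmin_r dl (Rmin (x - lo) (hi - x))).
  pose proof (Rmin_l (x - lo) (hi - x)). pose proof (Rmin_r (x - lo) (hi - x)).
  apply K; auto. lra. apply Rabs_def2 in Hh'. lra.
Qed.

Lemma Ck_rect_cont n u a b c d : Ck_rect n u a b c d -> cont_on_rect u a b c d.
Proof.
  intros [D [HD0 [HDc _]]] x y Hxy eps He.
  destruct (HDc 0%nat 0%nat ltac:(lia) x y Hxy eps He) as [dl [Hdl H]].
  exists dl; split; auto. intros x' y' Hxy' H1 H2. rewrite <- !HD0; auto.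
Qed.

Lemma Ck_rect_swap n (u : R -> R -> R) a b c d : Ck_rect n u a b c d -> Ck_rect n (fun y x => u x y) c d a b.
Proof.
  intros [D [HD0 [HDc HDd]]].
  exists (fun k l y x => D l k x y). split; [|split].
  - intros y x [Hy Hx]. apply HD0. split; auto.
  - intros k l Hkl. apply cont_on_rect_swap, HDc. lia.
  - intros k l Hkl y x [Hy Hx]. destruct (HDd l k ltac:(lia) x y (conj Hx Hy)). split; auto.
Qed.

Lemma Ck_rect_smooth4_slice n a b c d (D : nat -> nat -> R -> R -> R) y : (4 <= n)%nat -> c <= y <= d ->
  (forall k l, (k + l <= n)%nat -> cont_on_rect (D k l) a b c d) ->
  (forall k l, (k + l < n)%nat -> forall x y, in_rect a b c d x y ->
     has_deriv_in (fun t => D k l t y) a b x (D (S k) l x y) /\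
     has_deriv_in (fun t => D k l x t) c d y (D k (S l) x y)) ->
  smooth4_on a b (fun k x => D k 0%nat x y).
Proof.
  intros Hn Hy HDc HDd. split.
  - intros k Hk. apply (cont_on_rect_slice _ a b c d); auto. apply HDc. lia.
  - intros k Hk t Ht. apply (is_derive_of_has_deriv_in _ a b); auto.
    apply (HDd k 0%nat ltac:(lia) t y). split; auto. lra.
Qed.

Lemma pv_slice_interp_err_bound n u a b c d g : (4 <= n)%nat -> a < b -> c <= d -> 0 < g < 1 ->
  Ck_rect n u a b c d ->
  exists C, 0 <= C /\ forall y (M i : nat), c <= y <= d -> (1 <= M)%nat -> (1 <= i <= 2 * M - 1)%nat ->
    let h := (b - a) / INR M in
    let p := hnode a h i in
    Rabs (pv a b p g (fun x => u x y - quad_interp a h M (fun l => u (hnode a h l) y) x))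
      <= C * (h ^ 4 * Rpower (Rmin (p - a) (b - p)) (-g)).
Proof.
  intros Hn Hab Hcd Hg [D [HD0 [HDc HDd]]].
  destruct (cont_on_rect_bounded (D 3%nat 0%nat) a b c d) as [K3 [K30 HK3]]; try lra.
  { apply HDc; lia. }
  destruct (cont_on_rect_bounded (D 4%nat 0%nat) a b c d) as [K4 [K40 HK4]]; try lra.
  { apply HDc; lia. }
  exists ((K3 + K4) * interp_err_const a b g). split.
  { unfold interp_err_const. apply Rmult_le_pos. lra. pose proof (tweight_mass_ge0 a b g Hg).
    pose proof (Rpower_pos 3 (g + 1)). pose proof (Rpower_pos (b - a) g).
    assert (0 <= tweight_mass a b g * Rpower (b - a) g) by (apply Rmult_le_pos; lra). lra. }
  intros y M i Hy HM Hi h p.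
  assert (HMr : 1 <= INR M) by (replace 1 with (INR 1) by reflexivity; apply le_INR; lia).
  assert (Hh : 0 < h) by (unfold h; apply Rdiv_lt_0_compat; lra).
  assert (Hp : a < p < b) by (apply hnode_interior; auto).
  set (f := fun k x => D k 0%nat x y).
  assert (Hf : smooth4_on a b f) by (apply (Ck_rect_smooth4_slice n a b c d); auto).
  assert (Cu : cont_within a b (fun x => u x y)).
  { apply (cont_within_ext _ _ (f 0%nat)). intros x Hx. apply HD0. split; auto. apply Hf; lia. }
  rewrite (pv_ext a b p g (proj1 Hp) (proj2 Hp) Hg _
             (fun x => f 0%nat x - quad_interp a h M (fun l => f 0%nat (hnode a h l)) x)).
  - apply (pv_interp_err_bound a b g f K3 K4 M i); auto; intros t Ht; [apply HK3| apply HK4]; split; auto.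
  - apply cont_within_minus; auto.
    replace b with (a + INR M * h) by (unfold h; field; lra). apply quad_interp_cont; auto.
  - intros x Hx. unfold f. rewrite HD0 by (split; auto). f_equal.
    apply quad_interp_ext. intros l Hl. rewrite HD0; auto. split; auto. apply hnode_in; auto.
Qed.

(** * The tensor-product estimate *)

Lemma pv_quad_interp a h M p g v : 0 < h -> a < p < a + INR M * h -> 0 < g < 1 ->
  pv a (a + INR M * h) p g (quad_interp a h M v)
  = sum_f_R0 (fun l => v l * pv a (a + INR M * h) p g (phi_half a h M l)) (2 * M).
Proof.
  intros Hh Hp Hg.
  rewrite (pv_ext _ _ _ _ (proj1 Hp) (proj2 Hp) Hg _
             (fun x => sum_f_R0 (fun l => v l * phi_half a h M l x) (2 * M))).
  - apply pv_sum; try tauto. intros; apply phi_half_cont; auto.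
  - apply quad_interp_cont; auto.
  - intros x _. unfold quad_interp. apply sum_eq. intros; ring.
Qed.

Lemma uQ_quad_interp u a b c d Mx My x y :
  uQ u a b c d Mx My x y =
  quad_interp a ((b - a) / INR Mx) Mx (fun l => quad_interp c ((d - c) / INR My) My
     (fun r => u (hnode a ((b - a) / INR Mx) l) (hnode c ((d - c) / INR My) r)) y) x.
Proof.
  unfold uQ, quad_interp. apply sum_eq. intros l _. rewrite scal_sum. apply sum_eq. intros r _. ring.
Qed.

Section Tensor.
Variables (u : R -> R -> R) (a b c d g : R) (Mx My : nat) (xi yj : R).
Hypothesis (Hg : 0 < g < 1) (HMx : (1 <= Mx)%nat) (HMy : (1 <= My)%nat)
           (Hxi : a < xi < b) (Hyj : c < yj < d) (Hu : cont_on_rect u a b c d).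

Let hx := (b - a) / INR Mx.
Let hy := (d - c) / INR My.

Definition err_x (y x : R) : R := u x y - quad_interp a hx Mx (fun l => u (hnode a hx l) y) x.
Definition err_y (l : nat) (y : R) : R :=
  u (hnode a hx l) y - quad_interp c hy My (fun r => u (hnode a hx l) (hnode c hy r)) y.

Lemma tensor_err_split x y :
  u x y - uQ u a b c d Mx My x y = err_x y x + quad_interp a hx Mx (fun l => err_y l y) x.
Proof. rewrite uQ_quad_interp. fold hx hy. unfold err_x, err_y. rewrite quad_interp_minus. ring. Qed.

Let hx_pos : 0 < hx.
Proof. unfold hx. apply Rdiv_lt_0_compat. lra. apply lt_0_INR. lia. Qed.
Let hy_pos : 0 < hy.
Proof. unfold hy. apply Rdiv_lt_0_compat. lra. apply lt_0_INR. lia. Qed.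
Let b_eq : b = a + INR Mx * hx.
Proof. unfold hx. field. apply not_0_INR. lia. Qed.
Let d_eq : d = c + INR My * hy.
Proof. unfold hy. field. apply not_0_INR. lia. Qed.

Let node_x_in l : (l <= 2 * Mx)%nat -> a <= hnode a hx l <= b.
Proof. intros Hl. apply hnode_in; auto. lra. Qed.

Lemma quad_interp_x_cont v : cont_within a b (quad_interp a hx Mx v).
Proof. rewrite b_eq. apply quad_interp_cont, hx_pos. Qed.

Lemma err_x_cont y : c <= y <= d -> cont_within a b (err_x y).
Proof.
  intros Hy. apply cont_within_minus. apply (cont_on_rect_slice u a b c d); auto.
  apply quad_interp_x_cont.
Qed.

Lemma err_y_cont l : (l <= 2 * Mx)%nat -> cont_within c d (err_y l).
Proof.
  intros Hl. apply cont_within_minus.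
  - apply (cont_on_rect_slice (fun y x => u x y) c d a b); auto. apply cont_on_rect_swap; auto.
  - rewrite d_eq. apply quad_interp_cont, hy_pos.
Qed.

(** Uniform continuity of [u] makes the slices [err_x y] equicontinuous in [y]. *)
Lemma err_x_equicont eps : 0 < eps -> exists delta, 0 < delta /\ forall y y', c <= y <= d -> c <= y' <= d ->
  Rabs (y' - y) < delta -> forall x, a <= x <= b -> Rabs (err_x y' x - err_x y x) <= eps.
Proof.
  intros Heps. destruct (cont_on_rect_unif u a b c d Hu (eps / 4)) as [dl [Hdl Hunif]]. lra.
  exists dl. split; auto. intros y y' Hy Hy' Hyy x Hx.
  assert (Close : forall x, a <= x <= b -> Rabs (u x y' - u x y) < eps / 4).
  { intros z Hz. apply Hunif; try split; auto. rewrite Rminus_eq_0, Rabs_R0; lra. }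
  unfold err_x.
  replace (u x y' - quad_interp a hx Mx (fun l => u (hnode a hx l) y') x
           - (u x y - quad_interp a hx Mx (fun l => u (hnode a hx l) y) x))
    with ((u x y' - u x y) - quad_interp a hx Mx (fun l => u (hnode a hx l) y' - u (hnode a hx l) y) x)
    by (rewrite quad_interp_minus; ring).
  eapply Rle_trans. apply Rabs_triang. rewrite Rabs_Ropp.
  assert (Rabs (quad_interp a hx Mx (fun l => u (hnode a hx l) y' - u (hnode a hx l) y) x) <= 3 * (eps / 4)).
  { apply quad_interp_bound; auto using hx_pos. rewrite <- b_eq; auto.
    intros l Hl. apply Rlt_le, Close, node_x_in; auto. }
  pose proof (Close x Hx). lra.
Qed.

Lemma pv_err_x_cont : cont_within c d (fun y => pv a b xi g (err_x y)).
Proof. apply pv_cont_param; try tauto. apply err_x_cont. apply err_x_equicont. Qed.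

Let A l := pv a b xi g (phi_half a hx Mx l).

Lemma pv_quad_interp_x v : pv a b xi g (quad_interp a hx Mx v) = sum_f_R0 (fun l => v l * A l) (2 * Mx).
Proof. unfold A. rewrite b_eq. apply pv_quad_interp; auto using hx_pos. rewrite <- b_eq; auto. Qed.

Definition inner_pv (y : R) : R := pv a b xi g (fun x => u x y - uQ u a b c d Mx My x y).

Lemma inner_pv_split y : c <= y <= d ->
  inner_pv y = pv a b xi g (err_x y) + sum_f_R0 (fun l => err_y l y * A l) (2 * Mx).
Proof.
  intros Hy. unfold inner_pv.
  rewrite (pv_ext _ _ _ _ (proj1 Hxi) (proj2 Hxi) Hg _
             (fun x => err_x y x + quad_interp a hx Mx (fun l => err_y l y) x)).
  - rewrite pv_plus by (tauto || apply err_x_cont || apply quad_interp_x_cont; auto).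
    f_equal. apply pv_quad_interp_x.
  - apply (cont_within_ext _ _ (fun x => err_x y x + quad_interp a hx Mx (fun l => err_y l y) x)).
    intros; symmetry; apply tensor_err_split.
    apply cont_within_plus. apply err_x_cont; auto. apply quad_interp_x_cont.
  - intros; apply tensor_err_split.
Qed.

Lemma inner_pv_cont : cont_within c d inner_pv.
Proof.
  apply (cont_within_ext _ _ (fun y => pv a b xi g (err_x y) + sum_f_R0 (fun l => A l * err_y l y) (2 * Mx))).
  { intros y Hy. rewrite inner_pv_split by auto. f_equal. apply sum_eq. intros; ring. }
  apply cont_within_plus.
  - apply pv_err_x_cont.
  - apply cont_within_sum. intros l Hl. apply cont_within_scal, err_y_cont; auto.
Qed.

Lemma tensor_pv_bound Bx By :
  (forall y, c <= y <= d -> Rabs (pv a b xi g (err_x y)) <= Bx) ->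
  (forall l, (l <= 2 * Mx)%nat -> Rabs (pv c d yj g (err_y l)) <= By) ->
  exists I, weak_sing_double_int (fun x y => u x y - uQ u a b c d Mx My x y) a b c d xi yj g I /\
    Rabs I <= Bx * tweight_mass c d g + 3 * By * tweight_mass a b g.
Proof.
  intros HBx HBy. exists (pv c d yj g inner_pv). split.
  { exists inner_pv. split.
    - intros y Hy. apply sing_int_pv; try tauto.
      apply (cont_within_ext _ _ (fun x => err_x y x + quad_interp a hx Mx (fun l => err_y l y) x)).
      intros; symmetry; apply tensor_err_split.
      apply cont_within_plus. apply err_x_cont; auto. apply quad_interp_x_cont.
    - apply sing_int_pv; try tauto. apply inner_pv_cont. }
  set (Z := fun l => pv c d yj g (err_y l)).
  (* the outer integral of the second part is the inner one of the interpolant of [Z] *)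
  assert (Outer : pv c d yj g inner_pv
                  = pv c d yj g (fun y => pv a b xi g (err_x y)) + pv a b xi g (quad_interp a hx Mx Z)).
  { rewrite (pv_ext _ _ _ _ (proj1 Hyj) (proj2 Hyj) Hg inner_pv
               (fun y => pv a b xi g (err_x y) + sum_f_R0 (fun l => A l * err_y l y) (2 * Mx))).
    - rewrite pv_plus, pv_sum, pv_quad_interp_x; try tauto.
      + f_equal. apply sum_eq; intros; unfold Z; ring.
      + intros; apply err_y_cont; auto.
      + apply pv_err_x_cont.
      + apply cont_within_sum. intros; apply cont_within_scal, err_y_cont; auto.
    - apply inner_pv_cont.
    - intros y Hy. rewrite inner_pv_split by auto. f_equal. apply sum_eq. intros; ring. }
  rewrite Outer. eapply Rle_trans. apply Rabs_triang. apply Rplus_le_compat.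
  - apply pv_bound; try tauto. apply pv_err_x_cont.
  - apply pv_bound; try tauto. apply quad_interp_x_cont.
    intros x Hx. apply quad_interp_bound; auto using hx_pos. rewrite <- b_eq; auto.
Qed.

End Tensor.

Lemma weighted_sum_le Cx Cy Wx Wy X Y P Q :
  0 <= Cx -> 0 <= Cy -> 0 <= Wx -> 0 <= Wy -> 0 <= X -> 0 <= Y -> 0 <= P -> 0 <= Q ->
  Cx * X * Wy + 3 * (Cy * Y) * Wx <= (Cx * Wy + 3 * Cy * Wx) * (X + Y + P + Q).
Proof.
  intros. assert (0 <= Cx * Wy * (Y + P + Q)) by (apply Rmult_le_pos; [apply Rmult_le_pos|]; lra).
  assert (0 <= Cy * Wx * (X + P + Q)) by (apply Rmult_le_pos; [apply Rmult_le_pos|]; lra).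
  lra.
Qed.

Theorem lemma3p9 :
  forall (a b c d g : R) (u : R -> R -> R),
    a < b -> c < d -> 0 < g < 1 ->
    Ck_rect 6 u a b c d ->
    exists C : R,
      forall (Mx My i j : nat),
        (2 <= Mx)%nat -> (2 <= My)%nat ->
        (1 <= i <= 2 * Mx - 1)%nat -> (1 <= j <= 2 * My - 1)%nat ->
        let hx := (b - a) / INR Mx in
        let hy := (d - c) / INR My in
        let xi := hnode a hx i in
        let yj := hnode c hy j in
        let eta := Rmin (xi - a) (b - xi) in
        let teta := Rmin (yj - c) (d - yj) in
        exists I : R,
          weak_sing_double_int (fun x y => u x y - uQ u a b c d Mx My x y)
            a b c d xi yj g I /\
          Rabs I <= C * (hx ^ 4 * Rpower eta (- g) + hy ^ 4 * Rpower teta (- g)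
                         + Rpower hx (5 - g) + Rpower hy (5 - g)).
Proof.
  intros a b c d g u Hab Hcd Hg Hck.
  destruct (pv_slice_interp_err_bound 6 u a b c d g) as [Cx [Cx0 HCx]]; auto; try lia; try lra.
  destruct (pv_slice_interp_err_bound 6 (fun y x => u x y) c d a b g) as [Cy [Cy0 HCy]];
    try apply Ck_rect_swap; auto; try lia; try lra.
  pose proof (tweight_mass_ge0 a b g Hg). pose proof (tweight_mass_ge0 c d g Hg).
  exists (Cx * tweight_mass c d g + 3 * Cy * tweight_mass a b g).
  intros Mx My i j HMx HMy Hi Hj hx hy xi yj eta teta.
  destruct (tensor_pv_bound u a b c d g Mx My xi yj Hg ltac:(lia) ltac:(lia))
    with (Bx := Cx * (hx ^ 4 * Rpower eta (-g))) (By := Cy * (hy ^ 4 * Rpower teta (-g)))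
    as [I [HI HIb]].
  - apply hnode_interior; auto; lia.
  - apply hnode_interior; auto; lia.
  - apply (Ck_rect_cont 6); auto.
  - intros y Hy. apply HCx; auto; lia.
  - intros l Hl. apply HCy; try lia. apply hnode_in; auto; lia.
  - assert (0 < hx) by (apply Rdiv_lt_0_compat; [lra| apply lt_0_INR; lia]).
    assert (0 < hy) by (apply Rdiv_lt_0_compat; [lra| apply lt_0_INR; lia]).
    exists I. split; auto. eapply Rle_trans; [exact HIb|].
    apply weighted_sum_le; auto using Rlt_le, Rpower_pos, Rmult_le_pos, pow_le.
Qed.
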